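(* Let $\Gamma\subset SU(2)$ be finite and $\mathbb{V}=(\mathbb{C}^2\setminus\{0\})/\Gamma$ with its standard complex structure, flat metric $g_0$ and Levi-Civita connection $\nabla_0$, and let $S^1=\{\lambda\in\mathbb{C}:|\lambda|=1\}$ act on $\mathbb{V}$ by scalar multiplication. Let $\gamma\in\Omega^1(\mathbb{V})$ be $S^1$-invariant, with $d\gamma$ of type $(1,1)$ and $|\nabla_0^k\gamma|_{g_0}=O(r^{-3-k})$ as $r\to\infty$ for all $k\ge0$, where $r=\|\cdot\|$. Then there is an $S^1$-invariant $\psi\in C^\infty(\mathbb{V})$ such that $d\gamma=\sqrt{-1}\partial\bar\partial\psi$ and $|\nabla_0^k\psi|_{g_0}=O(r^{-2-k})$ as $r\to\infty$ for all $k\ge0$. *)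

From Stdlib Require Import Reals List.
From Coquelicot Require Import Coquelicot.
Open Scope R_scope.

(* A point of C^2, written (z1, z2) with z_a = x_a + i y_a.
   Real coordinates: 0 -> x1, 1 -> y1, 2 -> x2, 3 -> y2. *)
Definition pt := (C * C)%type.

Definition pt0 : pt := (RtoC 0, RtoC 0).

Definition coord (p : pt) (i : nat) : R :=
  match i with
  | 0%nat => fst (fst p) | 1%nat => snd (fst p)
  | 2%nat => fst (snd p) | 3%nat => snd (snd p)
  | _ => 0 end.

Definition zc (p : pt) (a : nat) : C :=
  match a with 0%nat => fst p | _ => snd p end.

Definition shift (p : pt) (i : nat) (t : R) : pt :=
  match i with
  | 0%nat => ((fst (fst p) + t, snd (fst p)), snd p)
  | 1%nat => ((fst (fst p), snd (fst p) + t), snd p)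
  | 2%nat => (fst p, (fst (snd p) + t, snd (snd p)))
  | 3%nat => (fst p, (fst (snd p), snd (snd p) + t))
  | _ => p end.

Definition sum4 (f : nat -> R) : R := f 0%nat + f 1%nat + f 2%nat + f 3%nat.
Definition sum2C (f : nat -> C) : C := (f 0%nat + f 1%nat)%C.

Definition normpt (p : pt) : R := sqrt (sum4 (fun i => coord p i ^ 2)).
Definition ptminus (p q : pt) : pt :=
  ((fst p - fst q)%C, (snd p - snd q)%C).

Definition partial (i : nat) (f : pt -> R) (p : pt) : R :=
  Derive (fun t => f (shift p i t)) 0.
Fixpoint Dl (l : list nat) (f : pt -> R) : pt -> R :=
  match l with nil => f | i :: l' => partial i (Dl l' f) end.

Definition cont_at (f : pt -> R) (p : pt) : Prop :=
  forall eps, 0 < eps -> exists delta, 0 < delta /\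
    forall q, normpt (ptminus q p) < delta -> Rabs (f q - f p) < eps.

Definition smooth_away (f : pt -> R) : Prop :=
  forall (l : list nat) (p : pt), p <> pt0 ->
    cont_at (Dl l f) p /\
    forall i, (i < 4)%nat -> ex_derive (fun t => Dl l f (shift p i t)) 0.

(* |nabla_0^k f| = O(r^(-m-k)) as r -> oo, for all k (flat metric: nabla_0^k
   has components the k-th partial derivatives in Euclidean coordinates). *)
Definition decays (f : pt -> R) (m : nat) : Prop :=
  forall k : nat, exists Cst R0 : R, forall (l : list nat) (p : pt),
    length l = k -> p <> pt0 -> R0 <= normpt p ->
    Rabs (Dl l f p) <= Cst / (normpt p ^ (m + k)).

(* real 1-forms: gamma = sum_j a j dx_j *)
Definition oneform := nat -> pt -> R.
Definition eval1 (a : oneform) (p v : pt) : R := sum4 (fun j => a j p * coord v j).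

Definition dform1 (a : oneform) (p u v : pt) : R :=
  sum4 (fun i => sum4 (fun j =>
    partial i (a j) p * (coord u i * coord v j - coord u j * coord v i))).

Definition dzdzb (a b : nat) (u v : pt) : C :=
  (zc u a * Cconj (zc v b) - zc v a * Cconj (zc u b))%C.

Definition type11 (beta : pt -> pt -> pt -> R) : Prop :=
  forall p, p <> pt0 -> exists h : nat -> nat -> C, forall u v,
    RtoC (beta p u v) = sum2C (fun a => sum2C (fun b => (h a b * dzdzb a b u v)%C)).

(* Wirtinger second derivative d^2 psi / dz_a dzbar_b
   = 1/4 (d_{x_a} - i d_{y_a})(d_{x_b} + i d_{y_b}) psi, for real psi *)
Definition d_z_zb (psi : pt -> R) (a b : nat) (p : pt) : C :=
  Cmult (RtoC (/4))
   ((Dl (2*a :: 2*b :: nil)%nat psi p + Dl (2*a+1 :: 2*b+1 :: nil)%nat psi p)%R,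
    (Dl (2*a :: 2*b+1 :: nil)%nat psi p - Dl (2*a+1 :: 2*b :: nil)%nat psi p)%R).

Definition i_ddbar (psi : pt -> R) (p u v : pt) : C :=
  (Ci * sum2C (fun a => sum2C (fun b => d_z_zb psi a b p * dzdzb a b u v)))%C.

Definition mat2 := ((C * C) * (C * C))%type.
Definition mat_act (M : mat2) (p : pt) : pt :=
  let '((a, b), (c, d)) := M in
  ((a * fst p + b * snd p)%C, (c * fst p + d * snd p)%C).
Definition mat_mul (M N : mat2) : mat2 :=
  let '((a, b), (c, d)) := M in let '((a', b'), (c', d')) := N in
  (((a*a' + b*c')%C, (a*b' + b*d')%C), ((c*a' + d*c')%C, (c*b' + d*d')%C)).
Definition mat_adj (M : mat2) : mat2 :=
  let '((a, b), (c, d)) := M in ((Cconj a, Cconj c), (Cconj b, Cconj d)).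
Definition mat_id : mat2 := ((RtoC 1, RtoC 0), (RtoC 0, RtoC 1)).
Definition in_SU2 (M : mat2) : Prop :=
  let '((a, b), (c, d)) := M in
  mat_mul (mat_adj M) M = mat_id /\ (a * d - b * c)%C = RtoC 1.
(* Gamma, given by the list of its elements, is a finite subgroup of SU(2) *)
Definition finite_subgroup_SU2 (G : list mat2) : Prop :=
  (forall M, In M G -> in_SU2 M) /\ In mat_id G /\
  (forall M N, In M G -> In N G -> In (mat_mul M N) G) /\
  (forall M, In M G -> In (mat_adj M) G).

Definition s1act (l : C) (p : pt) : pt := ((l * fst p)%C, (l * snd p)%C).

Definition fun_inv (g : pt -> pt) (f : pt -> R) : Prop :=
  forall p, p <> pt0 -> f (g p) = f p.
Definition form1_inv (g : pt -> pt) (a : oneform) : Prop :=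
  forall p v, p <> pt0 -> eval1 a (g p) (g v) = eval1 a p v.

From Stdlib Require Import Reals List Lia Lra Classical ClassicalEpsilon FunctionalExtensionality.
From Coquelicot Require Import Coquelicot.
Open Scope R_scope.

(** Let [xi q = i q] generate the circle action and [f = gamma(xi)].  Invariance of
    [gamma] gives [df = - xi _| d gamma] (Cartan's formula), and since [d gamma] has type
    (1,1) it is [J]-invariant; together these give [i ddbar f = 1/2 L_R d gamma], with [R]
    the radial vector field (in coordinates: [d gamma] plus half the radial derivative of
    its coefficients).  Put [psi p = -2 int_0^1 t^-1 f(p / t) dt].  Then [i ddbar psi (p)]
    is the integral over [0 < t < 1] of [d/dt (t^-2 d gamma_(p/t))], and
    [t^-2 d gamma_(p/t) = O(t^2)] because [d gamma = O(r^-4)]; hence [i ddbar psi = d gamma].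
    The bounds [f = O(r^-2)] with all derivatives pass to [psi], and [psi] is invariant under
    every complex-linear map preserving [gamma], since such maps commute with dilations. *)

Ltac case4 j := destruct j as [|[|[|[|j]]]]; try lia.

(** * Coordinates and norm on C^2 *)

Definition dilate (s : R) (p : pt) : pt :=
  ((s * fst (fst p), s * snd (fst p)), (s * fst (snd p), s * snd (snd p))).

Definition mkpt (f : nat -> R) : pt := ((f 0%nat, f 1%nat), (f 2%nat, f 3%nat)).

Lemma coord_mkpt f j : (j < 4)%nat -> coord (mkpt f) j = f j.
Proof. intros H; case4 j; reflexivity. Qed.

Lemma coord_shift p i t j : (i < 4)%nat ->
  coord (shift p i t) j = coord p j + (if Nat.eqb i j then t else 0).
Proof. intros Hi. destruct p as [[a b] [c d]]. case4 i; case4 j; simpl; ring. Qed.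

Lemma coord_ptminus q p j : coord (ptminus q p) j = coord q j - coord p j.
Proof. destruct q as [[a b] [c d]], p as [[a' b'] [c' d']]. case4 j; simpl; ring. Qed.

Lemma coord_dilate s p j : coord (dilate s p) j = s * coord p j.
Proof. destruct p as [[a b] [c d]]. case4 j; simpl; ring. Qed.

Lemma pt_ext p q : (forall j, (j < 4)%nat -> coord p j = coord q j) -> p = q.
Proof.
  destruct p as [[a b] [c d]], q as [[a' b'] [c' d']]. intros H.
  pose proof (H 0%nat ltac:(lia)); pose proof (H 1%nat ltac:(lia));
  pose proof (H 2%nat ltac:(lia)); pose proof (H 3%nat ltac:(lia)).
  simpl in *; subst; reflexivity.
Qed.

Lemma shift_0 p i : shift p i 0 = p.
Proof. destruct p as [[a b] [c d]]; case4 i; simpl; rewrite ?Rplus_0_r; reflexivity. Qed.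

Lemma shift_ge4 p i t : (4 <= i)%nat -> shift p i t = p.
Proof. intros H. case4 i; reflexivity. Qed.

Lemma shift_shift p i a b : shift (shift p i a) i b = shift p i (a + b).
Proof. destruct p as [[x y] [z w]]. case4 i; simpl; f_equal; try f_equal; ring. Qed.

Lemma shift_comm p i j a b : i <> j -> shift (shift p i a) j b = shift (shift p j b) i a.
Proof. intros Hij. destruct p as [[x y] [z w]]. case4 i; case4 j; reflexivity. Qed.

Lemma dilate_shift p i s t : dilate t (shift p i s) = shift (dilate t p) i (t * s).
Proof. destruct p as [[a b] [c d]]. case4 i; unfold dilate; simpl; f_equal; try f_equal; ring. Qed.

Lemma dilate_1 p : dilate 1 p = p.
Proof. apply pt_ext; intros j _; rewrite coord_dilate; ring. Qed.

Lemma sum4_le f g : (forall k, (k < 4)%nat -> f k <= g k) -> sum4 f <= sum4 g.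
Proof.
  intros H. unfold sum4. pose proof (H 0%nat ltac:(lia)); pose proof (H 1%nat ltac:(lia));
  pose proof (H 2%nat ltac:(lia)); pose proof (H 3%nat ltac:(lia)). lra.
Qed.

Lemma sum4_ext_lt4 f g : (forall k, (k < 4)%nat -> f k = g k) -> sum4 f = sum4 g.
Proof.
  intros H. unfold sum4. rewrite (H 0%nat), (H 1%nat), (H 2%nat), (H 3%nat) by lia. reflexivity.
Qed.

Lemma sum4_delta i (a : R) : (i < 4)%nat -> sum4 (fun k => if Nat.eqb i k then a else 0) = a.
Proof. intros H. unfold sum4. case4 i; simpl; ring. Qed.

Lemma Rabs_sum4 (h : nat -> R) : Rabs (sum4 h) <= sum4 (fun i => Rabs (h i)).
Proof.
  unfold sum4. eapply Rle_trans; [apply Rabs_triang|]. apply Rplus_le_compat_r.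
  eapply Rle_trans; [apply Rabs_triang|]. apply Rplus_le_compat_r. apply Rabs_triang.
Qed.

Lemma normpt_pt0 : normpt pt0 = 0.
Proof. unfold normpt, sum4; simpl. replace (_ + _ + _ + _) with 0 by ring. apply sqrt_0. Qed.

Lemma Rabs_coord_le_normpt p j : Rabs (coord p j) <= normpt p.
Proof.
  unfold normpt. rewrite <- sqrt_Rsqr_abs. apply sqrt_le_1_alt.
  unfold Rsqr, sum4.
  pose proof (pow2_ge_0 (fst (fst p))); pose proof (pow2_ge_0 (snd (fst p)));
  pose proof (pow2_ge_0 (fst (snd p))); pose proof (pow2_ge_0 (snd (snd p))).
  case4 j; simpl in *; nra.
Qed.

Lemma normpt_le_sum p : normpt p <= sum4 (fun j => Rabs (coord p j)).
Proof.
  unfold normpt, sum4.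
  rewrite <- (pow2_abs (coord p 0)), <- (pow2_abs (coord p 1)),
    <- (pow2_abs (coord p 2)), <- (pow2_abs (coord p 3)).
  set (a := Rabs (coord p 0)); set (b := Rabs (coord p 1));
  set (c := Rabs (coord p 2)); set (d := Rabs (coord p 3)).
  assert (0 <= a) by apply Rabs_pos. assert (0 <= b) by apply Rabs_pos.
  assert (0 <= c) by apply Rabs_pos. assert (0 <= d) by apply Rabs_pos.
  rewrite <- (sqrt_pow2 (a + b + c + d)) by lra.
  apply sqrt_le_1_alt. nra.
Qed.

Lemma normpt_mono a b : (forall j, (j < 4)%nat -> Rabs (coord a j) <= Rabs (coord b j)) ->
  normpt a <= normpt b.
Proof.
  intros H. unfold normpt. apply sqrt_le_1_alt. apply sum4_le. intros j Hj.
  rewrite <- (pow2_abs (coord a j)), <- (pow2_abs (coord b j)).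
  pose proof (H j Hj). pose proof (Rabs_pos (coord a j)). nra.
Qed.

Lemma normpt_eq0 p : normpt p = 0 -> p = pt0.
Proof.
  intros H. apply pt_ext. intros j Hj.
  pose proof (Rabs_coord_le_normpt p j) as Hc. rewrite H in Hc.
  assert (coord p j = 0) as -> by (apply Rabs_eq_0; pose proof (Rabs_pos (coord p j)); lra).
  case4 j; reflexivity.
Qed.

Lemma normpt_pos p : p <> pt0 -> 0 < normpt p.
Proof.
  intros H. destruct (sqrt_pos (sum4 (fun i => coord p i ^ 2))) as [H'|H']; auto.
  exfalso; apply H, normpt_eq0; auto.
Qed.

Lemma ptminus_eq0 z x : normpt (ptminus z x) <= 0 -> z = x.
Proof.
  intros H. apply pt_ext. intros j Hj.
  pose proof (Rabs_coord_le_normpt (ptminus z x) j) as C. rewrite coord_ptminus in C.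
  pose proof (Rabs_pos (coord z j - coord x j)).
  assert (E : Rabs (coord z j - coord x j) = 0) by lra.
  apply Rabs_eq_0 in E. lra.
Qed.

Lemma normpt_dilate s p : normpt (dilate s p) = Rabs s * normpt p.
Proof.
  unfold normpt. rewrite <- (sqrt_pow2 (Rabs s)) by apply Rabs_pos.
  rewrite <- sqrt_mult by (apply pow2_ge_0 || (unfold sum4; nra)).
  f_equal. unfold sum4. rewrite !coord_dilate, pow2_abs. ring.
Qed.

Lemma dilate_nonzero t p : t <> 0 -> p <> pt0 -> dilate t p <> pt0.
Proof.
  intros Ht Hp E. pose proof (normpt_dilate t p) as N. rewrite E, normpt_pt0 in N.
  pose proof (normpt_pos p Hp). pose proof (Rabs_pos_lt t Ht). nra.
Qed.

Lemma near_nonzero p q : normpt (ptminus q p) < normpt p -> q <> pt0.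
Proof.
  intros H E; subst. enough (normpt (ptminus pt0 p) = normpt p) by lra.
  unfold normpt. f_equal. unfold sum4. rewrite !coord_ptminus.
  destruct p as [[a b] [c d]]; simpl; ring.
Qed.

(** * Continuity and partial derivatives away from the origin *)

Lemma ball_pt (p q : pt) (e : R) :
  ball p e q <-> forall j, (j < 4)%nat -> Rabs (coord q j - coord p j) < e.
Proof.
  destruct p as [[a b] [c d]], q as [[a' b'] [c' d']]. split.
  - intros [[H0 H1] [H2 H3]] j Hj. case4 j; assumption.
  - intros H.
    pose proof (H 0%nat ltac:(lia)); pose proof (H 1%nat ltac:(lia));
    pose proof (H 2%nat ltac:(lia)); pose proof (H 3%nat ltac:(lia)).
    split; split; assumption.
Qed.

Lemma normpt_ball p q e : ball p e q -> normpt (ptminus q p) < 4 * e.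
Proof.
  intros Hb0. pose proof (proj1 (ball_pt _ _ _) Hb0) as Hb. clear Hb0. eapply Rle_lt_trans; [apply normpt_le_sum|].
  unfold sum4. rewrite !coord_ptminus.
  pose proof (Hb 0%nat ltac:(lia)); pose proof (Hb 1%nat ltac:(lia));
  pose proof (Hb 2%nat ltac:(lia)); pose proof (Hb 3%nat ltac:(lia)). lra.
Qed.

Lemma normpt_ball_lower p q e : ball p e q -> normpt p <= 4 * (normpt q + e).
Proof.
  intros Hb0. pose proof (proj1 (ball_pt _ _ _) Hb0) as Hb. clear Hb0. eapply Rle_trans; [apply normpt_le_sum|].
  replace (4 * (normpt q + e)) with (sum4 (fun _ => normpt q + e)) by (unfold sum4; ring).
  apply sum4_le. intros j Hj. specialize (Hb j Hj).
  pose proof (Rabs_coord_le_normpt q j). pose proof (Rabs_triang_inv (coord p j) (coord q j)).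
  rewrite Rabs_minus_sym in Hb. lra.
Qed.

Lemma cont_at_iff (f : pt -> R) p : cont_at f p <-> continuous f p.
Proof.
  split.
  - intros H. apply filterlim_locally. intros eps.
    destruct (H eps (cond_pos eps)) as [d [Hd Hq]].
    assert (Hd4 : 0 < d / 4) by lra.
    exists (mkposreal _ Hd4). intros q Hb. apply Hq.
    pose proof (normpt_ball p q _ Hb). simpl in *. lra.
  - intros H eps Heps.
    destruct (proj1 (filterlim_locally f (f p)) H (mkposreal eps Heps)) as [d Hd].
    exists d. split; [apply cond_pos|].
    intros q Hq. apply (Hd q). apply (proj2 (ball_pt _ _ _)). intros j _. rewrite <- coord_ptminus.
    eapply Rle_lt_trans; [apply Rabs_coord_le_normpt|]; auto.
Qed.

Lemma locally_nonzero p : p <> pt0 -> locally p (fun q => q <> pt0).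
Proof.
  intros Hp. assert (H : 0 < normpt p / 5) by (pose proof (normpt_pos p Hp); lra).
  exists (mkposreal _ H). intros q Hq. apply (near_nonzero p).
  pose proof (normpt_ball p q _ Hq). simpl in *. lra.
Qed.

Lemma normpt_shift2 p i j u v : (i < 4)%nat -> (j < 4)%nat ->
  normpt (ptminus (shift (shift p i u) j v) p) <= Rabs u + Rabs v.
Proof.
  intros Hi Hj. eapply Rle_trans; [apply normpt_le_sum|].
  rewrite <- (sum4_delta i (Rabs u)), <- (sum4_delta j (Rabs v)) by auto.
  replace (sum4 (fun k => if Nat.eqb i k then Rabs u else 0) + sum4 (fun k => if Nat.eqb j k then Rabs v else 0))
    with (sum4 (fun k => (if Nat.eqb i k then Rabs u else 0) + (if Nat.eqb j k then Rabs v else 0)))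
    by (unfold sum4; ring).
  apply sum4_le. intros k Hk. rewrite coord_ptminus, !coord_shift by auto.
  destruct (Nat.eqb i k), (Nat.eqb j k).
  - replace (coord p k + u + v - coord p k) with (u + v) by ring; apply Rabs_triang.
  - replace (coord p k + u + 0 - coord p k) with u by ring; lra.
  - replace (coord p k + 0 + v - coord p k) with v by ring; lra.
  - replace (coord p k + 0 + 0 - coord p k) with 0 by ring; rewrite Rabs_R0; lra.
Qed.

Lemma near_shift2_nonzero p i j u v : (i < 4)%nat -> (j < 4)%nat ->
  Rabs u + Rabs v < normpt p -> shift (shift p i u) j v <> pt0.
Proof.
  intros Hi Hj H. apply (near_nonzero p). eapply Rle_lt_trans; [apply normpt_shift2|]; auto.
Qed.

Lemma locally_shift_nonzero p i : p <> pt0 -> (i < 4)%nat -> locally 0 (fun t => shift p i t <> pt0).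
Proof.
  intros Hp Hi. assert (H : 0 < normpt p / 2) by (pose proof (normpt_pos p Hp); lra).
  exists (mkposreal _ H). intros t Ht. change (Rabs (t - 0) < normpt p / 2) in Ht.
  rewrite Rminus_0_r in Ht. rewrite <- (shift_0 (shift p i t) i).
  apply near_shift2_nonzero; auto. rewrite Rabs_R0. lra.
Qed.

Section ContinuousR.
Context {U : UniformSpace}.

Lemma continuous_Rplus (f g : U -> R) x :
  continuous f x -> continuous g x -> continuous (fun t => f t + g t) x.
Proof. intros Hf Hg. exact (continuous_plus f g x Hf Hg). Qed.

Lemma continuous_Rmult (f g : U -> R) x :
  continuous f x -> continuous g x -> continuous (fun t => f t * g t) x.
Proof. intros Hf Hg. exact (continuous_mult f g x Hf Hg). Qed.

Lemma continuous_Rscal (c : R) (f : U -> R) x :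
  continuous f x -> continuous (fun t => c * f t) x.
Proof. apply continuous_Rmult, continuous_const. Qed.

Lemma continuous_sum4 (f : nat -> U -> R) x :
  (forall k, (k < 4)%nat -> continuous (f k) x) -> continuous (fun t => sum4 (fun k => f k t)) x.
Proof. intros H. unfold sum4. repeat apply continuous_Rplus; apply H; lia. Qed.

Lemma continuous_pt (g : U -> pt) x :
  (forall j, (j < 4)%nat -> continuous (fun y => coord (g y) j) x) -> continuous g x.
Proof.
  intros H. apply filterlim_locally. intros eps.
  pose proof (proj1 (filterlim_locally (F := locally x) _ _) (H 0%nat ltac:(lia)) eps) as H0.
  pose proof (proj1 (filterlim_locally (F := locally x) _ _) (H 1%nat ltac:(lia)) eps) as H1.
  pose proof (proj1 (filterlim_locally (F := locally x) _ _) (H 2%nat ltac:(lia)) eps) as H2.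
  pose proof (proj1 (filterlim_locally (F := locally x) _ _) (H 3%nat ltac:(lia)) eps) as H3.
  generalize (filter_and _ _ H0 (filter_and _ _ H1 (filter_and _ _ H2 H3))).
  apply filter_imp. intros y [A [B [C D]]]. apply (proj2 (ball_pt _ _ _)). intros j Hj.
  case4 j; assumption.
Qed.
End ContinuousR.

Lemma continuous_coord p j : continuous (fun q : pt => coord q j) p.
Proof.
  apply cont_at_iff. intros eps He. exists eps. split; auto.
  intros q Hq. rewrite <- coord_ptminus. eapply Rle_lt_trans; [apply Rabs_coord_le_normpt|]; auto.
Qed.

Lemma is_derive_translate (F : R -> R) v l : is_derive (fun t => F (v + t)) 0 l -> is_derive F v l.
Proof.
  intros H.
  assert (H2 : is_derive (fun t => (fun s => F (v + s)) (t - v)) v (scal 1 l)).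
  { apply (is_derive_comp (fun s => F (v + s)) (fun t => t - v)).
    - replace (v - v) with 0 by ring. exact H.
    - auto_derive; auto; ring. }
  replace (scal 1 l) with l in H2 by (symmetry; exact (scal_one l)). eapply is_derive_ext; [|exact H2].
  intros t. simpl. f_equal. ring.
Qed.

Lemma is_derive_coord p i j : (i < 4)%nat ->
  is_derive (fun t => coord (shift p i t) j) 0 (if Nat.eqb i j then 1 else 0).
Proof.
  intros Hi. apply (is_derive_ext (fun t => coord p j + (if Nat.eqb i j then t else 0))).
  { intros t. rewrite coord_shift by auto. reflexivity. }
  destruct (Nat.eqb i j); auto_derive; auto; ring.
Qed.

Lemma is_derive_sum4 (h : nat -> R -> R) t (d : nat -> R) :
  (forall i, (i < 4)%nat -> is_derive (h i) t (d i)) -> is_derive (fun x => sum4 (fun i => h i x)) t (sum4 d).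
Proof.
  intros H. unfold sum4.
  exact (is_derive_plus _ _ _ _ _ (is_derive_plus _ _ _ _ _ (is_derive_plus _ _ _ _ _
     (H 0%nat ltac:(lia)) (H 1%nat ltac:(lia))) (H 2%nat ltac:(lia))) (H 3%nat ltac:(lia))).
Qed.

Lemma Dl_app l m g : Dl l (Dl m g) = Dl (l ++ m) g.
Proof. induction l; simpl; auto. rewrite IHl. reflexivity. Qed.

Lemma smooth_Dl g m : smooth_away g -> smooth_away (Dl m g).
Proof. intros H l p Hp. rewrite Dl_app. apply H; auto. Qed.

Lemma continuous_Dl g l p : smooth_away g -> p <> pt0 -> continuous (Dl l g) p.
Proof. intros H Hp. apply cont_at_iff. apply H; auto. Qed.

Lemma is_derive_Dl_shift g l q j v : smooth_away g -> (j < 4)%nat -> shift q j v <> pt0 ->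
  is_derive (fun t => Dl l g (shift q j t)) v (Dl (j :: l) g (shift q j v)).
Proof.
  intros Hs Hj Hn. apply is_derive_translate.
  destruct (Hs l (shift q j v) Hn) as [_ Hd]. specialize (Hd j Hj).
  apply Derive_correct in Hd.
  eapply is_derive_ext; [|exact Hd]. intros t. simpl. rewrite shift_shift. reflexivity.
Qed.

Lemma is_derive_Dl g l p i : smooth_away g -> (i < 4)%nat -> p <> pt0 ->
  is_derive (fun t => Dl l g (shift p i t)) 0 (Dl (i :: l) g p).
Proof.
  intros Hs Hi Hp. pose proof (is_derive_Dl_shift g l p i 0 Hs Hi) as H.
  rewrite shift_0 in H. auto.
Qed.

Lemma Dl_ge4 i l h p : (4 <= i)%nat -> Dl (i :: l) h p = 0.
Proof.
  intros Hi. simpl. unfold partial. rewrite (Derive_ext _ (fun _ => Dl l h p)).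
  - apply Derive_const.
  - intros t. rewrite shift_ge4; auto.
Qed.

Lemma Dl_cons_of_is_derive (G H : pt -> R) l (g : pt -> R) i p :
  p <> pt0 -> (i < 4)%nat ->
  (forall q, q <> pt0 -> Dl l g q = G q) ->
  is_derive (fun t => G (shift p i t)) 0 (H p) -> Dl (i :: l) g p = H p.
Proof.
  intros Hp Hi HG Hd. simpl. unfold partial.
  rewrite (Derive_ext_loc _ (fun t => G (shift p i t))).
  - apply is_derive_unique; auto.
  - eapply filter_imp; [|apply locally_shift_nonzero; eauto]. intros t Ht. apply HG; auto.
Qed.

Lemma partial_sum4 (h : nat -> pt -> R) j q : (forall i, (i < 4)%nat -> smooth_away (h i)) ->
  (j < 4)%nat -> q <> pt0 ->
  partial j (fun q => sum4 (fun i => h i q)) q = sum4 (fun i => partial j (h i) q).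
Proof.
  intros Hs Hj Hq. unfold partial at 1. apply is_derive_unique.
  apply is_derive_sum4. intros i Hi. apply (is_derive_Dl (h i) nil); auto.
Qed.

(** * Mean value theorem, chain rule and symmetry of second derivatives *)

Definition stair (x y : pt) (k : nat) : pt :=
  mkpt (fun j => if Nat.ltb j k then coord y j else coord x j).

Lemma stair_0 x y : stair x y 0 = x.
Proof. apply pt_ext; intros j Hj; unfold stair; rewrite coord_mkpt; auto. Qed.

Lemma stair_4 x y : stair x y 4 = y.
Proof.
  apply pt_ext; intros j Hj; unfold stair; rewrite coord_mkpt; auto.
  destruct (Nat.ltb_spec j 4); auto; lia.
Qed.

Lemma stair_S x y k : (k < 4)%nat ->
  shift (stair x y k) k (coord y k - coord x k) = stair x y (S k).
Proof.
  intros Hk. apply pt_ext; intros j Hj. rewrite coord_shift by auto. unfold stair.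
  rewrite !coord_mkpt by auto.
  destruct (Nat.eqb_spec k j); destruct (Nat.ltb_spec j k); destruct (Nat.ltb_spec j (S k));
    subst; try lia; ring.
Qed.

Lemma Rabs_le_between s d : Rmin 0 d <= s <= Rmax 0 d -> Rabs s <= Rabs d.
Proof.
  unfold Rmin, Rmax. destruct (Rle_dec 0 d); intros [H1 H2].
  - rewrite !Rabs_right by lra; lra.
  - rewrite !Rabs_left1 by lra; lra.
Qed.

Lemma normpt_stair_shift x y k s : (k < 4)%nat -> Rabs s <= Rabs (coord y k - coord x k) ->
  normpt (ptminus (shift (stair x y k) k s) x) <= normpt (ptminus y x).
Proof.
  intros Hk Hs. apply normpt_mono. intros j Hj. rewrite !coord_ptminus, coord_shift by auto.
  unfold stair. rewrite coord_mkpt by auto.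
  destruct (Nat.eqb_spec k j); destruct (Nat.ltb_spec j k); subst; try lia.
  - replace (coord x j + s - coord x j) with s by ring. auto.
  - replace (coord y j + 0 - coord x j) with (coord y j - coord x j) by ring. lra.
  - replace (coord x j + 0 - coord x j) with 0 by ring. rewrite Rabs_R0. apply Rabs_pos.
Qed.

Lemma mean_value_shift g w k d : smooth_away g -> (k < 4)%nat ->
  (forall s, Rmin 0 d <= s <= Rmax 0 d -> shift w k s <> pt0) ->
  exists s, Rmin 0 d <= s <= Rmax 0 d /\ g (shift w k d) - g w = partial k g (shift w k s) * d.
Proof.
  intros Hs Hk Hn.
  destruct (MVT_gen (fun s => g (shift w k s)) 0 d (fun s => partial k g (shift w k s))) as [c [Hc E]].
  - intros s Hs'. apply (is_derive_Dl_shift g nil w k s); auto. apply Hn; lra.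
  - intros s Hs'. apply continuity_pt_filterlim.
    apply (ex_derive_continuous (K := R_AbsRing) (V := R_NormedModule) (fun s => g (shift w k s))).
    eexists. apply (is_derive_Dl_shift g nil w k s); auto.
  - exists c. split; auto. rewrite shift_0 in E. rewrite E. ring.
Qed.

(* Mean value theorem along the four edges of the staircase from [x] to [y]. *)
Lemma mean_value_coords g x y : smooth_away g -> normpt (ptminus y x) < normpt x ->
  exists z : nat -> pt, (forall k, normpt (ptminus (z k) x) <= normpt (ptminus y x)) /\
    g y - g x = sum4 (fun k => (coord y k - coord x k) * partial k g (z k)).
Proof.
  intros Hs Hb.
  assert (St : forall k, (k < 4)%nat -> exists s,
     Rmin 0 (coord y k - coord x k) <= s <= Rmax 0 (coord y k - coord x k) /\
     g (stair x y (S k)) - g (stair x y k) =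
       partial k g (shift (stair x y k) k s) * (coord y k - coord x k)).
  { intros k Hk. rewrite <- (stair_S x y k Hk). apply mean_value_shift; auto.
    intros s Hs'. apply (near_nonzero x). eapply Rle_lt_trans; [|exact Hb].
    apply normpt_stair_shift; auto. apply Rabs_le_between; auto. }
  destruct (St 0%nat ltac:(lia)) as [s0 [H0 E0]].
  destruct (St 1%nat ltac:(lia)) as [s1 [H1 E1]].
  destruct (St 2%nat ltac:(lia)) as [s2 [H2 E2]].
  destruct (St 3%nat ltac:(lia)) as [s3 [H3 E3]].
  exists (fun k => match k with 0 => shift (stair x y 0) 0 s0 | 1 => shift (stair x y 1) 1 s1
     | 2 => shift (stair x y 2) 2 s2 | 3 => shift (stair x y 3) 3 s3 | _ => x end).
  split.
  - intros k. case4 k; try (apply normpt_stair_shift; [lia | apply Rabs_le_between; auto]).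
    apply normpt_mono. intros j Hj. rewrite !coord_ptminus, Rminus_diag, Rabs_R0. apply Rabs_pos.
  - rewrite <- (stair_4 x y) at 1. rewrite <- (stair_0 x y) at 2. unfold sum4.
    replace (g (stair x y 4) - g (stair x y 0)) with
      ((g (stair x y 1) - g (stair x y 0)) + (g (stair x y 2) - g (stair x y 1)) +
       (g (stair x y 3) - g (stair x y 2)) + (g (stair x y 4) - g (stair x y 3))) by ring.
    rewrite E0, E1, E2, E3. ring.
Qed.

Lemma caratheodory (G phi : R -> R) t0 :
  locally t0 (fun t => G t - G t0 = (t - t0) * phi t) -> continuous phi t0 ->
  is_derive G t0 (phi t0).
Proof.
  intros [d1 Hd1] Hc. apply is_derive_Reals. intros eps Heps.
  destruct (proj1 (filterlim_locally phi (phi t0)) Hc (mkposreal eps Heps)) as [d2 Hd2].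
  assert (Hd : 0 < Rmin d1 d2) by (apply Rmin_pos; apply cond_pos).
  exists (mkposreal _ Hd). intros h Hh Hhd. simpl in Hhd.
  assert (B1 : ball t0 d1 (t0 + h)).
  { change (Rabs (t0 + h - t0) < d1). replace (t0 + h - t0) with h by ring.
    pose proof (Rmin_l d1 d2). lra. }
  assert (B2 : ball t0 d2 (t0 + h)).
  { change (Rabs (t0 + h - t0) < d2). replace (t0 + h - t0) with h by ring.
    pose proof (Rmin_r d1 d2). lra. }
  specialize (Hd1 _ B1). specialize (Hd2 _ B2).
  rewrite Hd1. replace (t0 + h - t0) with h by ring.
  replace (h * phi (t0 + h) / h) with (phi (t0 + h)) by (field; auto). exact Hd2.
Qed.

Definition slope (c : R -> R) t0 d t := if Req_EM_T t t0 then d else (c t - c t0) / (t - t0).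

Lemma continuous_slope c t0 d : is_derive c t0 d -> continuous (slope c t0 d) t0.
Proof.
  intros H. apply is_derive_Reals in H. apply filterlim_locally. intros eps.
  destruct (H eps (cond_pos eps)) as [dl Hdl]. exists dl. intros t Ht.
  change (Rabs (slope c t0 d t - slope c t0 d t0) < eps). change (Rabs (t - t0) < dl) in Ht.
  unfold slope. destruct (Req_EM_T t0 t0); [|congruence].
  destruct (Req_EM_T t t0).
  - rewrite Rminus_diag, Rabs_R0. apply cond_pos.
  - specialize (Hdl (t - t0)). rewrite Rplus_minus in Hdl. apply Hdl; auto. lra.
Qed.

Lemma locally_near (c : R -> pt) t0 r : continuous c t0 -> 0 < r ->
  locally t0 (fun t => normpt (ptminus (c t) (c t0)) < r).
Proof.
  intros Hc Hr. assert (Hr4 : 0 < r / 5) by lra.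
  eapply filter_imp; [|exact (proj1 (filterlim_locally c (c t0)) Hc (mkposreal _ Hr4))].
  intros t Hb. pose proof (normpt_ball _ _ _ Hb). simpl in *. lra.
Qed.

Lemma normpt_ptminus_diag x : normpt (ptminus x x) = 0.
Proof.
  replace (ptminus x x) with pt0; [apply normpt_pt0|].
  apply pt_ext; intros j Hj; rewrite coord_ptminus. case4 j; simpl; ring.
Qed.

Lemma continuous_squeeze (h : pt -> R) (c : R -> pt) (Z : R -> pt) t0 :
  cont_at h (c t0) -> continuous c t0 -> Z t0 = c t0 ->
  locally t0 (fun t => normpt (ptminus (Z t) (c t0)) <= normpt (ptminus (c t) (c t0))) ->
  continuous (fun t => h (Z t)) t0.
Proof.
  intros Hh Hc HZ0 HZ. apply filterlim_locally. intros eps.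
  destruct (Hh eps (cond_pos eps)) as [d [Hd Hq]].
  generalize (filter_and _ _ HZ (locally_near c t0 d Hc Hd)). apply filter_imp.
  intros t [H1 H2]. change (Rabs (h (Z t) - h (Z t0)) < eps). rewrite HZ0.
  apply Hq. lra.
Qed.

(* Caratheodory's criterion, with the slope of [g] along [c] given by the mean value theorem
   on the staircase; only the continuity of the partial derivatives of [g] is needed. *)
Lemma chain_rule g (c : R -> pt) t0 (dc : nat -> R) : smooth_away g -> c t0 <> pt0 ->
  (forall k, (k < 4)%nat -> is_derive (fun t => coord (c t) k) t0 (dc k)) ->
  is_derive (fun t => g (c t)) t0 (sum4 (fun k => dc k * partial k g (c t0))).
Proof.
  intros Hs Hx Hd. set (x := c t0).
  assert (Hnx : 0 < normpt x) by (apply normpt_pos; auto).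
  assert (Hc : continuous c t0).
  { apply continuous_pt. intros j Hj.
    apply (ex_derive_continuous (K := R_AbsRing) (V := R_NormedModule)).
    eexists; apply Hd; auto. }
  destruct (choice (fun t (z : nat -> pt) => normpt (ptminus (c t) x) < normpt x ->
     (forall k, normpt (ptminus (z k) x) <= normpt (ptminus (c t) x)) /\
     g (c t) - g x = sum4 (fun k => (coord (c t) k - coord x k) * partial k g (z k)))) as [Z HZ].
  { intros t. destruct (classic (normpt (ptminus (c t) x) < normpt x)) as [Hct|Hct].
    - destruct (mean_value_coords g x (c t) Hs Hct) as [z Hz]. exists z. auto.
    - exists (fun _ => x). tauto. }
  assert (HZ0 : forall k, Z t0 k = x).
  { intros k. apply ptminus_eq0. rewrite <- (normpt_ptminus_diag x).
    apply (HZ t0). rewrite normpt_ptminus_diag. exact Hnx. }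
  set (phi := fun t =>
    sum4 (fun k => slope (fun s => coord (c s) k) t0 (dc k) t * partial k g (Z t k))).
  replace (sum4 (fun k => dc k * partial k g x)) with (phi t0).
  2:{ unfold phi, slope, sum4. destruct (Req_EM_T t0 t0); [|congruence]. rewrite !HZ0. reflexivity. }
  apply caratheodory.
  - eapply filter_imp; [|apply (locally_near c t0 _ Hc Hnx)].
    intros t Ht. destruct (HZ t Ht) as [_ E]. fold x. rewrite E. unfold phi, sum4, slope.
    destruct (Req_EM_T t t0) as [->|Hne]; [fold x; ring |].
    unfold x. field. lra.
  - apply continuous_sum4. intros k Hk. apply continuous_Rmult.
    + apply continuous_slope. apply Hd; auto.
    + apply (continuous_squeeze (partial k g) c (fun t => Z t k)); auto.
      * apply (Hs (k :: nil)); auto.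
      * eapply filter_imp; [|apply (locally_near c t0 _ Hc Hnx)]. intros t Ht. apply (HZ t Ht).
Qed.

Section Schwarz.
Variables (g : pt -> R) (p : pt) (i j : nat).
Hypotheses (Hg : smooth_away g) (Hi : (i < 4)%nat) (Hj : (j < 4)%nat) (Hij : i <> j).

Let pt2 u v := shift (shift p i u) j v.

Lemma is_derive_pt2_snd l u v : Rabs u + Rabs v < normpt p ->
  is_derive (fun t => Dl l g (pt2 u t)) v (Dl (j :: l) g (pt2 u v)).
Proof. intros H. apply is_derive_Dl_shift; auto. apply near_shift2_nonzero; auto. Qed.

Lemma is_derive_pt2_fst l u v : Rabs u + Rabs v < normpt p ->
  is_derive (fun t => Dl l g (pt2 t v)) u (Dl (i :: l) g (pt2 u v)).
Proof.
  intros H. unfold pt2. rewrite shift_comm by auto.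
  eapply is_derive_ext; [intros t; rewrite shift_comm by auto; reflexivity|].
  apply is_derive_Dl_shift; auto. rewrite <- shift_comm by auto. apply near_shift2_nonzero; auto.
Qed.

Lemma small_sum_lt u v : Rabs u < normpt p / 4 -> Rabs v < normpt p / 4 ->
  Rabs u + Rabs v < normpt p.
Proof. intros Hu Hv. pose proof (Rabs_pos u); pose proof (Rabs_pos v). lra. Qed.

Lemma locally_small_fst u v : Rabs u < normpt p / 4 -> Rabs v < normpt p / 4 ->
  locally u (fun z => Rabs z + Rabs v < normpt p).
Proof.
  intros Hu Hv. assert (Hd : 0 < normpt p / 4) by (pose proof (Rabs_pos u); lra).
  exists (mkposreal _ Hd). intros z Hz. change (Rabs (z - u) < normpt p / 4) in Hz.
  pose proof (Rabs_triang_inv z u). lra.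
Qed.

Lemma locally_small_snd u v : Rabs u < normpt p / 4 -> Rabs v < normpt p / 4 ->
  locally v (fun z => Rabs u + Rabs z < normpt p).
Proof.
  intros Hu Hv. eapply filter_imp; [|apply (locally_small_fst v u); auto].
  intros z Hz; lra.
Qed.

Lemma Derive_pt2_snd_fst u v : Rabs u < normpt p / 4 -> Rabs v < normpt p / 4 ->
  is_derive (fun z => Derive (fun t => g (pt2 z t)) v) u (Dl (i :: j :: nil) g (pt2 u v)).
Proof.
  intros Hu Hv. apply (is_derive_ext_loc (fun z => Dl (j :: nil) g (pt2 z v))).
  - eapply filter_imp; [|apply (locally_small_fst u v); auto]. intros z Hz.
    symmetry. apply is_derive_unique. apply (is_derive_pt2_snd nil); auto.
  - apply is_derive_pt2_fst, small_sum_lt; auto.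
Qed.

Lemma Derive_pt2_fst_snd u v : Rabs u < normpt p / 4 -> Rabs v < normpt p / 4 ->
  is_derive (fun z => Derive (fun t => g (pt2 t z)) u) v (Dl (j :: i :: nil) g (pt2 u v)).
Proof.
  intros Hu Hv. apply (is_derive_ext_loc (fun z => Dl (i :: nil) g (pt2 u z))).
  - eapply filter_imp; [|apply (locally_small_snd u v); auto]. intros z Hz.
    symmetry. apply is_derive_unique. apply (is_derive_pt2_fst nil); auto.
  - apply is_derive_pt2_snd, small_sum_lt; auto.
Qed.

Lemma continuity_2d_pt2 l : p <> pt0 -> continuity_2d_pt (fun u v => Dl l g (pt2 u v)) 0 0.
Proof.
  intros Hp eps. destruct (Hg l p Hp) as [Hc _].
  destruct (Hc eps (cond_pos eps)) as [d [Hd Hq]].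
  assert (Hd2 : 0 < d / 2) by lra. exists (mkposreal _ Hd2). intros u v Hu Hv. simpl in Hu, Hv.
  unfold pt2. rewrite !shift_0. apply Hq. eapply Rle_lt_trans; [apply normpt_shift2; auto|].
  rewrite Rminus_0_r in Hu, Hv. lra.
Qed.

Lemma schwarz_ne : p <> pt0 -> Dl (i :: j :: nil) g p = Dl (j :: i :: nil) g p.
Proof.
  intros Hp. assert (Hnp : 0 < normpt p) by (apply normpt_pos; auto).
  assert (Hsmall : forall u v, Rabs (u - 0) < normpt p / 4 -> Rabs (v - 0) < normpt p / 4 ->
    Rabs u < normpt p / 4 /\ Rabs v < normpt p / 4) by (intros u v; rewrite !Rminus_0_r; auto).
  assert (Hd4 : 0 < normpt p / 4) by lra.
  change (Dl (i :: j :: nil) g p) with (Derive (fun z => Derive (fun t => g (pt2 z t)) 0) 0).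
  transitivity (Derive (fun z => Derive (fun t => g (pt2 t z)) 0) 0).
  2:{ apply Derive_ext. intros z. apply Derive_ext. intros t. unfold pt2. rewrite shift_comm; auto. }
  apply Schwarz.
  - exists (mkposreal _ Hd4). intros u v Hu Hv. destruct (Hsmall u v Hu Hv) as [Hu' Hv'].
    repeat split; eexists.
    + apply (is_derive_pt2_fst nil), small_sum_lt; auto.
    + apply (is_derive_pt2_snd nil), small_sum_lt; auto.
    + apply Derive_pt2_snd_fst; auto.
    + apply Derive_pt2_fst_snd; auto.
  - apply continuity_2d_pt_ext_loc with (f := fun u v => Dl (i :: j :: nil) g (pt2 u v));
      [|apply continuity_2d_pt2; auto].
    exists (mkposreal _ Hd4). intros u v Hu Hv. destruct (Hsmall u v Hu Hv) as [Hu' Hv'].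
    symmetry. apply is_derive_unique, Derive_pt2_snd_fst; auto.
  - apply continuity_2d_pt_ext_loc with (f := fun u v => Dl (j :: i :: nil) g (pt2 u v));
      [|apply continuity_2d_pt2; auto].
    exists (mkposreal _ Hd4). intros u v Hu Hv. destruct (Hsmall u v Hu Hv) as [Hu' Hv'].
    symmetry. apply is_derive_unique, Derive_pt2_fst_snd; auto.
Qed.
End Schwarz.

Lemma schwarz g p i j : smooth_away g -> p <> pt0 -> (i < 4)%nat -> (j < 4)%nat ->
  Dl (i :: j :: nil) g p = Dl (j :: i :: nil) g p.
Proof.
  intros Hs Hp Hi Hj. destruct (Nat.eq_dec i j) as [->|Hne]; [reflexivity|].
  apply schwarz_ne; auto.
Qed.

(** * Linear combinations and multiplication by a coordinate *)

Definition lincomb (a b : R) (g h : pt -> R) : pt -> R := fun q => a * g q + b * h q.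

Section Linear.
Variables (a b : R) (g h : pt -> R).
Hypotheses (Hg : smooth_away g) (Hh : smooth_away h).

Lemma Dl_lincomb l : forall p, p <> pt0 ->
  Dl l (lincomb a b g h) p = a * Dl l g p + b * Dl l h p.
Proof.
  induction l as [|i l IH]; intros p Hp; [reflexivity|].
  destruct (Nat.lt_ge_cases i 4) as [Hi|Hi]; [|rewrite !Dl_ge4 by auto; ring].
  apply (Dl_cons_of_is_derive (fun q => a * Dl l g q + b * Dl l h q)
    (fun q => a * Dl (i :: l) g q + b * Dl (i :: l) h q)); auto.
  apply (is_derive_plus (fun t => a * Dl l g (shift p i t)) (fun t => b * Dl l h (shift p i t)));
  apply is_derive_scal; apply is_derive_Dl; auto.
Qed.

Lemma smooth_lincomb : smooth_away (lincomb a b g h).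
Proof.
  intros l p Hp. split.
  - apply cont_at_iff. apply (continuous_ext_loc _ (fun q => a * Dl l g q + b * Dl l h q)).
    { eapply filter_imp; [|apply locally_nonzero; eauto]. intros q Hq. symmetry. apply Dl_lincomb; auto. }
    apply continuous_Rplus; apply continuous_Rscal; apply continuous_Dl; auto.
  - intros i Hi. eexists. eapply is_derive_ext_loc.
    { eapply filter_imp; [|apply locally_shift_nonzero; eauto]. intros t Ht. symmetry. apply Dl_lincomb; auto. }
    apply (is_derive_plus (fun t => a * Dl l g (shift p i t)) (fun t => b * Dl l h (shift p i t)));
    apply is_derive_scal; apply is_derive_Dl; auto.
Qed.

Lemma decays_lincomb m : decays g m -> decays h m -> decays (lincomb a b g h) m.
Proof.
  intros Dg Dh k. destruct (Dg k) as [C1 [R1 H1]], (Dh k) as [C2 [R2 H2]].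
  exists (Rabs a * Rabs C1 + Rabs b * Rabs C2), (Rmax R1 R2). intros l p Hl Hp HR.
  rewrite Dl_lincomb by auto.
  specialize (H1 l p Hl Hp (Rle_trans _ _ _ (Rmax_l R1 R2) HR)).
  specialize (H2 l p Hl Hp (Rle_trans _ _ _ (Rmax_r R1 R2) HR)).
  assert (Hn : 0 < normpt p ^ (m + k)) by (apply pow_lt; apply normpt_pos; auto).
  unfold Rdiv in *. rewrite Rmult_plus_distr_r.
  eapply Rle_trans; [apply Rabs_triang|]. rewrite !Rabs_mult.
  apply Rplus_le_compat; rewrite Rmult_assoc; apply Rmult_le_compat_l; try apply Rabs_pos;
  (eapply Rle_trans; [eassumption|]); apply Rmult_le_compat_r;
  try (left; apply Rinv_0_lt_compat; auto); apply Rle_abs.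
Qed.
End Linear.

Definition sum_list (s : list R) := fold_right Rplus 0 s.

Lemma sum_list_app s t : sum_list (s ++ t) = sum_list s + sum_list t.
Proof. induction s; simpl; [ring|]. unfold sum_list in *. simpl. rewrite IHs. ring. Qed.

Lemma sum_list_map0 {A} (Ls : list A) (F : A -> R) : (forall l, F l = 0) -> sum_list (map F Ls) = 0.
Proof. intros H. induction Ls; simpl; auto. unfold sum_list in *; simpl. rewrite H, IHLs. ring. Qed.

Lemma Rabs_sum_list_le {A} (Ls : list A) (F : A -> R) B : 0 <= B ->
  (forall l, In l Ls -> Rabs (F l) <= B) -> Rabs (sum_list (map F Ls)) <= INR (length Ls) * B.
Proof.
  intros HB H. induction Ls as [|a Ls IH].
  - simpl. unfold sum_list; simpl. rewrite Rabs_R0. lra.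
  - change (length (a :: Ls)) with (S (length Ls)). rewrite S_INR. unfold sum_list in *.
    simpl map. simpl fold_right. eapply Rle_trans; [apply Rabs_triang|].
    assert (H1 := H a (or_introl eq_refl)).
    assert (H2 : Rabs (fold_right Rplus 0 (map F Ls)) <= INR (length Ls) * B)
      by (apply IH; intros l' Hl'; apply H; right; auto).
    lra.
Qed.

Definition mul_coord (j : nat) (g : pt -> R) := fun q => coord q j * g q.

Fixpoint delete_each (j : nat) (l : list nat) : list (list nat) :=
  match l with
  | nil => nil
  | i :: l' => (if Nat.eqb i j then l' :: nil else nil) ++ map (cons i) (delete_each j l')
  end.

Lemma length_delete_each_elem j l l' : In l' (delete_each j l) -> S (length l') = length l.
Proof.
  revert l'. induction l as [|i l IH]; simpl; [tauto|]. intros l' Hin.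
  apply in_app_or in Hin. destruct Hin as [Hin|Hin].
  - destruct (Nat.eqb i j); simpl in Hin; [destruct Hin as [<-|[]]; auto | contradiction].
  - apply in_map_iff in Hin. destruct Hin as [x [<- Hx]]. simpl. rewrite (IH x Hx). reflexivity.
Qed.

Lemma length_delete_each j l : (length (delete_each j l) <= length l)%nat.
Proof.
  induction l as [|i l IH]; simpl; auto. rewrite length_app, length_map.
  destruct (Nat.eqb i j); simpl; lia.
Qed.

Definition leibniz_coord j g l p :=
  coord p j * Dl l g p + sum_list (map (fun l' => Dl l' g p) (delete_each j l)).

Section MulCoord.
Variables (j : nat) (g : pt -> R).
Hypotheses (Hg : smooth_away g) (Hj : (j < 4)%nat).

Lemma is_derive_sum_list_Dl Ls p i : (i < 4)%nat -> p <> pt0 ->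
  is_derive (fun t => sum_list (map (fun l' => Dl l' g (shift p i t)) Ls)) 0
    (sum_list (map (fun l' => Dl (i :: l') g p) Ls)).
Proof.
  intros Hi Hp. induction Ls as [|l' Ls IH]; simpl.
  - apply (is_derive_const 0).
  - apply (is_derive_plus (fun t => Dl l' g (shift p i t))
      (fun t => sum_list (map (fun l' => Dl l' g (shift p i t)) Ls))); auto.
    apply is_derive_Dl; auto.
Qed.

Lemma is_derive_leibniz_coord l p i : (i < 4)%nat -> p <> pt0 ->
  is_derive (fun t => leibniz_coord j g l (shift p i t)) 0 (leibniz_coord j g (i :: l) p).
Proof.
  intros Hi Hp.
  pose proof (is_derive_mult (fun t => coord (shift p i t) j) (fun t => Dl l g (shift p i t)) 0 _ _
     (is_derive_coord p i j Hi) (is_derive_Dl g l p i Hg Hi Hp) Rmult_comm) as H1.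
  pose proof (is_derive_plus _ _ _ _ _ H1 (is_derive_sum_list_Dl (delete_each j l) p i Hi Hp)) as H.
  unfold leibniz_coord.
  replace (coord p j * Dl (i :: l) g p + sum_list (map (fun l' => Dl l' g p) (delete_each j (i :: l))))
    with (plus (plus (mult (if Nat.eqb i j then 1 else 0) (Dl l g (shift p i 0)))
       (mult (coord (shift p i 0) j) (Dl (i :: l) g p)))
       (sum_list (map (fun l' => Dl (i :: l') g p) (delete_each j l)))); [exact H|].
  rewrite shift_0. simpl delete_each. rewrite map_app, sum_list_app, map_map.
  change (plus (plus (mult ?a ?b) (mult ?c ?d)) ?e) with (a * b + c * d + e).
  destruct (Nat.eqb i j); simpl; unfold sum_list; simpl; ring.
Qed.

Lemma Dl_mul_coord l : forall p, p <> pt0 -> Dl l (mul_coord j g) p = leibniz_coord j g l p.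
Proof.
  induction l as [|i l IH]; intros p Hp.
  - unfold leibniz_coord, mul_coord, sum_list; simpl. ring.
  - destruct (Nat.lt_ge_cases i 4) as [Hi|Hi].
    + apply (Dl_cons_of_is_derive (leibniz_coord j g l) (leibniz_coord j g (i :: l))); auto.
      apply is_derive_leibniz_coord; auto.
    + rewrite Dl_ge4 by auto. unfold leibniz_coord. rewrite Dl_ge4 by auto. simpl delete_each.
      destruct (Nat.eqb_spec i j); [lia|]. simpl. rewrite map_map.
      rewrite sum_list_map0; [ring|]. intros l'. apply Dl_ge4; auto.
Qed.

Lemma smooth_mul_coord : smooth_away (mul_coord j g).
Proof.
  intros l p Hp. split.
  - apply cont_at_iff. apply (continuous_ext_loc _ (leibniz_coord j g l)).
    { eapply filter_imp; [|apply locally_nonzero; eauto]. intros q Hq.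
      symmetry. apply Dl_mul_coord; auto. }
    unfold leibniz_coord. apply continuous_Rplus.
    + apply continuous_Rmult; [apply continuous_coord|apply continuous_Dl; auto].
    + induction (delete_each j l); simpl; [apply continuous_const|].
      apply continuous_Rplus; auto. apply continuous_Dl; auto.
  - intros i Hi. eexists. eapply is_derive_ext_loc.
    { eapply filter_imp; [|apply locally_shift_nonzero; eauto]. intros t Ht.
      symmetry. apply Dl_mul_coord; auto. }
    apply is_derive_leibniz_coord; auto.
Qed.

Lemma decays_mul_coord m : decays g (S m) -> decays (mul_coord j g) m.
Proof.
  intros Dg k. destruct (Dg k) as [C1 [R1 H1]], (Dg (pred k)) as [C2 [R2 H2]].
  exists (Rabs C1 + INR k * Rabs C2), (Rmax R1 R2). intros l p Hl Hp HR.
  rewrite Dl_mul_coord by auto. unfold leibniz_coord.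
  assert (Hn : 0 < normpt p) by (apply normpt_pos; auto).
  assert (Hnk : 0 < normpt p ^ (m + k)) by (apply pow_lt; auto).
  assert (Hnk' : 0 < / normpt p ^ (m + k)) by (apply Rinv_0_lt_compat; auto).
  specialize (H1 l p Hl Hp (Rle_trans _ _ _ (Rmax_l R1 R2) HR)).
  eapply Rle_trans; [apply Rabs_triang|]. rewrite Rabs_mult.
  unfold Rdiv. rewrite Rmult_plus_distr_r. apply Rplus_le_compat.
  - eapply Rle_trans.
    { apply Rmult_le_compat; try apply Rabs_pos. apply Rabs_coord_le_normpt. exact H1. }
    replace (S m + k)%nat with (S (m + k)) by lia. simpl pow. unfold Rdiv.
    rewrite Rinv_mult. replace (normpt p * (C1 * (/ normpt p * / normpt p ^ (m + k))))
      with (C1 * / normpt p ^ (m + k)) by (field; lra).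
    apply Rmult_le_compat_r; [lra | apply Rle_abs].
  - destruct k as [|k].
    + destruct l; simpl in Hl; try lia. simpl. unfold sum_list; simpl. rewrite Rabs_R0. lra.
    + eapply Rle_trans.
      { apply (Rabs_sum_list_le _ _ (Rabs C2 * / normpt p ^ (m + S k))).
        - apply Rmult_le_pos; [apply Rabs_pos | left; apply Rinv_0_lt_compat, pow_lt; auto].
        - intros l' Hin. pose proof (length_delete_each_elem j l l' Hin) as E.
          rewrite Hl in E. injection E as E.
          eapply Rle_trans; [apply (H2 l' p); auto; eapply Rle_trans; [apply Rmax_r|exact HR]|].
          replace (S m + pred (S k))%nat with (m + S k)%nat by (simpl; lia).
          unfold Rdiv. apply Rmult_le_compat_r; [|apply Rle_abs].
          left; apply Rinv_0_lt_compat, pow_lt; auto. }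
      rewrite Rmult_assoc. apply Rmult_le_compat_r.
      * apply Rmult_le_pos; [apply Rabs_pos | left; apply Rinv_0_lt_compat, pow_lt; auto].
      * apply le_INR. rewrite <- Hl. apply length_delete_each.
Qed.
End MulCoord.

(** * The contraction of gamma with the circle generator *)

(* Multiplication by [i] in real coordinates: [coord (i v) j = Jsgn j * coord v (Jidx j)]. *)
Definition Jidx (k : nat) : nat :=
  match k with 0 => 1 | 1 => 0 | 2 => 3 | 3 => 2 | _ => k end%nat.
Definition Jsgn (k : nat) : R :=
  match k with 0%nat => -1 | 1%nat => 1 | 2%nat => -1 | 3%nat => 1 | _ => 0 end.
Definition coordJ (v : pt) (j : nat) : R := Jsgn j * coord v (Jidx j).

Definition wedge (u v : pt) (j k : nat) : R := coord u j * coord v k - coord u k * coord v j.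

Definition iddbar_hess (H : nat -> nat -> R) (u v : pt) : R :=
  / 2 * sum4 (fun j => sum4 (fun k => Jsgn k * H j (Jidx k) * wedge u v j k)).

Definition dform1_partial (gamma : oneform) (i : nat) (q u v : pt) : R :=
  sum4 (fun j => sum4 (fun k => Dl (i :: j :: nil) (gamma k) q * wedge u v j k)).

Lemma Jidx_lt4 k : (k < 4)%nat -> (Jidx k < 4)%nat.
Proof. intros Hk. case4 k; simpl; lia. Qed.

Lemma coord_s1act l v j : coord (s1act l v) j = fst l * coord v j + snd l * coordJ v j.
Proof. destruct v as [[a b] [c d]], l as [x y]. unfold coordJ; case4 j; simpl; ring. Qed.

Lemma coord_s1act_Ci v j : coord (s1act Ci v) j = coordJ v j.
Proof. rewrite coord_s1act. simpl. ring. Qed.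

Lemma is_derive_coordJ q m j : (m < 4)%nat ->
  is_derive (fun t => coordJ (shift q m t) j) 0 (Jsgn j * (if Nat.eqb m (Jidx j) then 1 else 0)).
Proof. intros Hm. apply is_derive_scal. apply is_derive_coord; auto. Qed.

Lemma is_derive_s1act_coord v j :
  is_derive (fun t => coord (s1act (cos t, sin t) v) j) 0 (coordJ v j).
Proof.
  apply (is_derive_ext (fun t => cos t * coord v j + sin t * coordJ v j)).
  { intros t. rewrite coord_s1act. reflexivity. }
  auto_derive; auto. rewrite cos_0, sin_0. ring.
Qed.

Lemma s1act_cos_sin_0 v : s1act (cos 0, sin 0) v = v.
Proof. apply pt_ext; intros j Hj. rewrite coord_s1act. simpl. rewrite cos_0, sin_0. ring. Qed.

Lemma Cmod_cos_sin t : Cmod (cos t, sin t) = 1.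
Proof.
  unfold Cmod. simpl. transitivity (sqrt 1); [f_equal | apply sqrt_1].
  pose proof (sin2_cos2 t). unfold Rsqr in H. nra.
Qed.

Lemma dzdzb_s1act_Ci a b u v : dzdzb a b (s1act Ci u) (s1act Ci v) = dzdzb a b u v.
Proof.
  assert (Jmul : forall z w, ((Ci * z) * Cconj (Ci * w))%C = (z * Cconj w)%C)
    by (intros [x y] [x' y']; unfold Cmult, Cconj, Ci; simpl; f_equal; ring).
  unfold dzdzb. destruct a, b; simpl; rewrite !Jmul; reflexivity.
Qed.

Definition basis (k : nat) : pt := mkpt (fun j => if Nat.eqb j k then 1 else 0).

Definition iota_xi (gamma : oneform) (q : pt) : R := eval1 gamma q (s1act Ci q).

Lemma iota_xi_lincomb gamma : iota_xi gamma =
  lincomb (-1) 1 (mul_coord 1 (gamma 0%nat)) (lincomb 1 1 (mul_coord 0 (gamma 1%nat))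
     (lincomb (-1) 1 (mul_coord 3 (gamma 2%nat)) (mul_coord 2 (gamma 3%nat)))).
Proof.
  apply functional_extensionality. intros q. unfold iota_xi, eval1, lincomb, mul_coord, sum4.
  rewrite !coord_s1act_Ci. unfold coordJ; simpl. ring.
Qed.

Section IotaXi.
Variable gamma : oneform.
Hypothesis Hsm : forall j, (j < 4)%nat -> smooth_away (gamma j).

Lemma smooth_iota_xi : smooth_away (iota_xi gamma).
Proof.
  rewrite iota_xi_lincomb.
  repeat apply smooth_lincomb; apply smooth_mul_coord; try apply Hsm; lia.
Qed.

Lemma decays_iota_xi : (forall j, (j < 4)%nat -> decays (gamma j) 3) -> decays (iota_xi gamma) 2.
Proof.
  intros Hd. rewrite iota_xi_lincomb.
  assert (S : forall j k, (j < 4)%nat -> (k < 4)%nat -> smooth_away (mul_coord k (gamma j)))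
    by (intros; apply smooth_mul_coord; auto).
  assert (D : forall j k, (j < 4)%nat -> (k < 4)%nat -> decays (mul_coord k (gamma j)) 2)
    by (intros; apply decays_mul_coord; auto).
  repeat (apply decays_lincomb || apply smooth_lincomb); first [apply S | apply D]; lia.
Qed.

Lemma partial_iota_xi q m : q <> pt0 -> (m < 4)%nat ->
  partial m (iota_xi gamma) q = sum4 (fun j =>
    partial m (gamma j) q * coordJ q j + gamma j q * (Jsgn j * (if Nat.eqb m (Jidx j) then 1 else 0))).
Proof.
  intros Hq Hm. unfold partial at 1. apply is_derive_unique.
  unfold iota_xi, eval1.
  apply (is_derive_ext (fun t => sum4 (fun j => gamma j (shift q m t) * coordJ (shift q m t) j))).
  { intros t. unfold sum4. rewrite !coord_s1act_Ci. reflexivity. }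
  apply is_derive_sum4. intros j Hj.
  pose proof (is_derive_mult _ _ 0 _ _ (is_derive_Dl (gamma j) nil q m (Hsm j Hj) Hm Hq)
    (is_derive_coordJ q m j Hm) Rmult_comm) as H.
  cbv beta in H. rewrite shift_0 in H. exact H.
Qed.

Hypothesis HS1 : forall l : C, Cmod l = 1 -> form1_inv (s1act l) gamma.

Lemma lie_xi_gamma_eq0 q v : q <> pt0 -> sum4 (fun j =>
    sum4 (fun i => coordJ q i * partial i (gamma j) q) * coord v j + gamma j q * coordJ v j) = 0.
Proof.
  intros Hq. set (c := fun t => s1act (cos t, sin t) q).
  assert (Hc0 : c 0 = q) by apply s1act_cos_sin_0.
  assert (Hj : forall j, (j < 4)%nat ->
    is_derive (fun t => gamma j (c t) * coord (s1act (cos t, sin t) v) j) 0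
      (sum4 (fun i => coordJ q i * partial i (gamma j) q) * coord v j + gamma j q * coordJ v j)).
  { intros j Hj. pose proof (chain_rule (gamma j) c 0 (coordJ q) (Hsm j Hj)) as Hg.
    rewrite Hc0 in Hg.
    pose proof (is_derive_mult _ _ 0 _ _ (Hg Hq (fun k _ => is_derive_s1act_coord q k))
      (is_derive_s1act_coord v j) Rmult_comm) as H.
    cbv beta in H. rewrite Hc0, s1act_cos_sin_0 in H. exact H. }
  pose proof (is_derive_sum4 _ 0 _ Hj) as HD.
  apply (is_derive_ext _ (fun _ => eval1 gamma q v)) in HD.
  2:{ intros t. apply (HS1 (cos t, sin t) (Cmod_cos_sin t) q v Hq). }
  apply is_derive_unique in HD. rewrite Derive_const in HD. now symmetry.
Qed.

Lemma partial_iota_xi_cartan q m : q <> pt0 -> (m < 4)%nat ->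
  partial m (iota_xi gamma) q =
  sum4 (fun i => coordJ q i * (partial m (gamma i) q - partial i (gamma m) q)).
Proof.
  intros Hq Hm. rewrite partial_iota_xi by auto.
  pose proof (lie_xi_gamma_eq0 q (basis m) Hq) as S.
  case4 m; unfold sum4, coordJ, Jsgn, Jidx, basis, mkpt in *; simpl in *; lra.
Qed.

Hypothesis H11 : type11 (dform1 gamma).

Lemma dform1_s1act_Ci q u v : q <> pt0 ->
  dform1 gamma q (s1act Ci u) (s1act Ci v) = dform1 gamma q u v.
Proof.
  intros Hq. destruct (H11 q Hq) as [h Hh].
  pose proof (Hh (s1act Ci u) (s1act Ci v)) as H1. pose proof (Hh u v) as H2.
  unfold sum2C in H1, H2. rewrite !dzdzb_s1act_Ci, <- H2 in H1.
  apply (f_equal fst) in H1. exact H1.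
Qed.

Lemma curl_J_02 q : q <> pt0 -> partial 0 (gamma 2%nat) q - partial 2 (gamma 0%nat) q =
  partial 1 (gamma 3%nat) q - partial 3 (gamma 1%nat) q.
Proof.
  intros Hq. pose proof (dform1_s1act_Ci q (basis 0) (basis 2) Hq) as H.
  unfold dform1, sum4, basis, mkpt in H. simpl in H. lra.
Qed.

Lemma curl_J_03 q : q <> pt0 -> partial 0 (gamma 3%nat) q - partial 3 (gamma 0%nat) q =
  - (partial 1 (gamma 2%nat) q - partial 2 (gamma 1%nat) q).
Proof.
  intros Hq. pose proof (dform1_s1act_Ci q (basis 0) (basis 3) Hq) as H.
  unfold dform1, sum4, basis, mkpt in H. simpl in H. lra.
Qed.

(* Cartan's formula and the [J]-invariance of [d gamma]: [d (iota_xi gamma) o J] is the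
   contraction of [d gamma] with the radial field. *)
Lemma Jpartial_iota_xi q k : q <> pt0 -> (k < 4)%nat ->
  Jsgn k * partial (Jidx k) (iota_xi gamma) q =
  sum4 (fun i => coord q i * (partial i (gamma k) q - partial k (gamma i) q)).
Proof.
  intros Hq Hk. rewrite partial_iota_xi_cartan by (auto using Jidx_lt4).
  assert (E31 : partial 3 (gamma 1%nat) q =
    partial 1 (gamma 3%nat) q - partial 0 (gamma 2%nat) q + partial 2 (gamma 0%nat) q)
    by (pose proof (curl_J_02 q Hq); lra).
  assert (E30 : partial 3 (gamma 0%nat) q =
    partial 0 (gamma 3%nat) q + partial 1 (gamma 2%nat) q - partial 2 (gamma 1%nat) q)
    by (pose proof (curl_J_03 q Hq); lra).
  case4 k; unfold sum4, coordJ, Jsgn, Jidx; simpl; rewrite ?E31, ?E30; ring.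
Qed.

Lemma partial_mul_coord_curl q i j k : q <> pt0 -> (i < 4)%nat -> (j < 4)%nat -> (k < 4)%nat ->
  partial j (mul_coord i (lincomb 1 (-1) (partial i (gamma k)) (partial k (gamma i)))) q =
  (if Nat.eqb j i then partial i (gamma k) q - partial k (gamma i) q else 0) +
  coord q i * (Dl (j :: i :: nil) (gamma k) q - Dl (j :: k :: nil) (gamma i) q).
Proof.
  intros Hq Hi Hj Hk.
  assert (S1 : smooth_away (partial i (gamma k))) by exact (smooth_Dl (gamma k) (i :: nil) (Hsm k Hk)).
  assert (S2 : smooth_away (partial k (gamma i))) by exact (smooth_Dl (gamma i) (k :: nil) (Hsm i Hi)).
  change (partial j ?X q) with (Dl (j :: nil) X q).
  rewrite Dl_mul_coord by (auto using smooth_lincomb).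
  unfold leibniz_coord. rewrite Dl_lincomb by auto. simpl delete_each.
  destruct (Nat.eqb j i); simpl; unfold sum_list, lincomb; simpl; ring.
Qed.

Lemma partial_Jpartial_iota_xi q j k : q <> pt0 -> (j < 4)%nat -> (k < 4)%nat ->
  Jsgn k * Dl (j :: Jidx k :: nil) (iota_xi gamma) q =
  sum4 (fun i => (if Nat.eqb j i then partial i (gamma k) q - partial k (gamma i) q else 0) +
     coord q i * (Dl (j :: i :: nil) (gamma k) q - Dl (j :: k :: nil) (gamma i) q)).
Proof.
  intros Hq Hj Hk.
  transitivity (partial j (fun q => Jsgn k * partial (Jidx k) (iota_xi gamma) q) q).
  { unfold partial at 1. rewrite Derive_scal. reflexivity. }
  set (curl := fun q => sum4 (fun i =>
    mul_coord i (lincomb 1 (-1) (partial i (gamma k)) (partial k (gamma i))) q)).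
  transitivity (partial j curl q).
  { unfold partial at 1 3. apply Derive_ext_loc.
    eapply filter_imp; [|apply (locally_shift_nonzero q j Hq Hj)]. intros t Ht.
    rewrite Jpartial_iota_xi by auto. unfold curl, mul_coord, lincomb, sum4. ring. }
  unfold curl. rewrite partial_sum4; auto.
  - unfold sum4. rewrite !partial_mul_coord_curl by (auto; lia). reflexivity.
  - intros i Hi. apply smooth_mul_coord; auto. apply smooth_lincomb.
    + exact (smooth_Dl (gamma k) (i :: nil) (Hsm k Hk)).
    + exact (smooth_Dl (gamma i) (k :: nil) (Hsm i Hi)).
Qed.

Lemma iddbar_iota_xi q u v : q <> pt0 ->
  iddbar_hess (fun i j => Dl (i :: j :: nil) (iota_xi gamma) q) u v =
  dform1 gamma q u v + / 2 * sum4 (fun i => coord q i * dform1_partial gamma i q u v).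
Proof.
  intros Hq.
  assert (Hschwarz : forall k i j, (k < 4)%nat -> (i < 4)%nat -> (j < 4)%nat ->
    partial j (partial i (gamma k)) q = partial i (partial j (gamma k)) q)
    by (intros k i j Hk Hi Hj; exact (schwarz (gamma k) q j i (Hsm k Hk) Hq Hj Hi)).
  unfold iddbar_hess. unfold sum4 at 1 2. cbv beta.
  rewrite !partial_Jpartial_iota_xi by (auto; lia).
  unfold dform1_partial, dform1, wedge, sum4. simpl.
  (* Order every second derivative of [gamma] as [partial a (partial b _)] with [a <= b]. *)
  repeat match goal with
  | |- context [partial ?a (partial ?b (gamma ?k)) q] =>
      lazymatch eval compute in (Nat.ltb b a) with true => rewrite (Hschwarz k b a) by lia end
  end.
  field.
Qed.
End IotaXi.

(** * The radial potential *)

Lemma normpt_dilate_inv t p : 0 < t -> normpt (dilate (/ t) p) = normpt p / t.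
Proof.
  intros Ht. rewrite normpt_dilate, Rabs_right by (left; apply Rinv_0_lt_compat; auto).
  unfold Rdiv; ring.
Qed.

Lemma dilate_inv_nonzero t p : 0 < t -> p <> pt0 -> dilate (/ t) p <> pt0.
Proof. intros Ht Hp. apply dilate_nonzero; auto. apply Rinv_neq_0_compat; lra. Qed.

Lemma continuous_inv_pow n t0 : t0 <> 0 -> continuous (fun t : R => / t ^ n) t0.
Proof.
  intros H. apply (ex_derive_continuous (K := R_AbsRing) (V := R_NormedModule) (fun t : R => / t ^ n)).
  auto_derive. apply pow_nonzero; auto.
Qed.

Lemma continuous_dilate_inv (p : pt) (t0 : R) : t0 <> 0 ->
  continuous (fun z : pt * R => dilate (/ snd z) (fst z)) (p, t0).
Proof.
  intros Ht. apply continuous_pt. intros j Hj.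
  apply (continuous_ext (fun z : pt * R => / snd z ^ 1 * coord (fst z) j)).
  { intros z. rewrite coord_dilate, pow_1. reflexivity. }
  apply (continuous_Rmult (fun z : pt * R => / snd z ^ 1)).
  - apply (continuous_comp (fun z : pt * R => snd z) (fun t => / t ^ 1)).
    + apply continuous_snd.
    + apply continuous_inv_pow; auto.
  - apply (continuous_comp (fun z : pt * R => fst z) (fun q => coord q j)).
    + apply continuous_fst.
    + apply continuous_coord.
Qed.

Lemma continuous_shift_fst p i t : (i < 4)%nat ->
  continuous (fun z : R * R => shift p i (fst z)) (0, t).
Proof.
  intros Hi. apply continuous_pt. intros j Hj.
  apply (continuous_ext (fun z : R * R => coord p j + (if Nat.eqb i j then fst z else 0))).
  { intros z. rewrite coord_shift by auto. reflexivity. }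
  apply continuous_Rplus; [apply continuous_const|].
  destruct (Nat.eqb i j); [apply continuous_fst|apply continuous_const].
Qed.

Section Kernel.
Variable f : pt -> R.
Hypotheses (Hs : smooth_away f) (Hd : decays f 2).

(* For [t > 0], [kernel l p t] is the derivative [Dl l] in [p] of [t^-1 f (p / t)]. *)
Definition kernel (l : list nat) (p : pt) (t : R) : R :=
  if Rlt_dec 0 t then / t ^ S (length l) * Dl l f (dilate (/ t) p) else 0.

Lemma kernel_bound k C R0 : (forall (l : list nat) (p : pt), length l = k -> p <> pt0 ->
    R0 <= normpt p -> Rabs (Dl l f p) <= C / normpt p ^ (2 + k)) ->
  forall l p t, length l = k -> p <> pt0 -> 0 < t -> R0 <= normpt p / t ->
  Rabs (kernel l p t) <= Rabs C * t / normpt p ^ (2 + k).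
Proof.
  intros HB l p t Hl Hp Ht HR. unfold kernel. destruct (Rlt_dec 0 t) as [_|]; [|lra].
  assert (Hnp : 0 < normpt p) by (apply normpt_pos; auto).
  assert (HB' := HB l _ Hl (dilate_inv_nonzero t p Ht Hp) ltac:(rewrite normpt_dilate_inv; auto)).
  rewrite normpt_dilate_inv in HB' by auto. rewrite Rabs_mult.
  rewrite (Rabs_right (/ t ^ S (length l))) by (left; apply Rinv_0_lt_compat; apply pow_lt; auto).
  rewrite Hl in *.
  assert (Htk : 0 < t ^ S k) by (apply pow_lt; auto).
  assert (Hnk : 0 < normpt p ^ S k) by (apply pow_lt; auto).
  replace (normpt p / t) with (normpt p * / t) in HB' by reflexivity.
  rewrite Rpow_mult_distr, pow_inv in HB'.
  replace (2 + k)%nat with (S (S k)) in * by lia.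
  change (normpt p ^ S (S k)) with (normpt p * normpt p ^ S k) in *.
  change (t ^ S (S k)) with (t * t ^ S k) in *.
  eapply Rle_trans. { apply Rmult_le_compat_l; [left; apply Rinv_0_lt_compat; auto|]. exact HB'. }
  assert (E : / (t ^ S k) * (C / (normpt p * normpt p ^ S k * / (t * t ^ S k))) =
              C * t / (normpt p * normpt p ^ S k)) by (field; repeat split; lra).
  rewrite E. unfold Rdiv. apply Rmult_le_compat_r.
  - left; apply Rinv_0_lt_compat. apply Rmult_lt_0_compat; auto.
  - apply Rmult_le_compat_r; [lra|apply Rle_abs].
Qed.

Lemma kernel_le0 l p t : t <= 0 -> kernel l p t = 0.
Proof. intros Ht. unfold kernel. destruct (Rlt_dec 0 t); [lra|reflexivity]. Qed.

Lemma kernel_continuous_pos l p t0 : p <> pt0 -> 0 < t0 ->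
  continuous (fun z : pt * R => kernel l (fst z) (snd z)) (p, t0).
Proof.
  intros Hp Ht0.
  apply (continuous_ext_loc _ (fun z : pt * R => / snd z ^ S (length l) * Dl l f (dilate (/ snd z) (fst z)))).
  - assert (Hh : 0 < t0 / 2) by lra. exists (mkposreal _ Hh). intros [q t] [_ Hb].
    change (Rabs (t - t0) < t0 / 2) in Hb. apply Rabs_def2 in Hb. simpl. unfold kernel.
    destruct (Rlt_dec 0 t) as [_|Hn]; [reflexivity|lra].
  - apply (continuous_Rmult (fun z : pt * R => / snd z ^ S (length l))).
    + apply (continuous_comp (fun z : pt * R => snd z) (fun t => / t ^ S (length l))).
      * apply continuous_snd.
      * apply continuous_inv_pow; simpl; lra.
    + apply (continuous_comp (fun z : pt * R => dilate (/ snd z) (fst z)) (Dl l f)).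
      * apply continuous_dilate_inv; lra.
      * apply continuous_Dl; auto. apply dilate_inv_nonzero; auto.
Qed.

(* The decay [f = O(r^-2)] (with derivatives) makes the kernel vanish to first order at
   [t = 0], locally uniformly in [p]. *)
Lemma kernel_continuous_0 l p : p <> pt0 ->
  continuous (fun z : pt * R => kernel l (fst z) (snd z)) (p, 0).
Proof.
  intros Hp. apply filterlim_locally. intros eps.
  assert (Hnp : 0 < normpt p) by (apply normpt_pos; auto).
  set (rho := normpt p / 8). assert (Hrho : 0 < rho) by (unfold rho; lra).
  destruct (Hd (length l)) as [C [R0 HB]].
  set (M := Rabs C / rho ^ (2 + length l)).
  assert (HM : 0 <= M) by (apply Rmult_le_pos; [apply Rabs_pos|left; apply Rinv_0_lt_compat, pow_lt; lra]).
  pose proof (cond_pos eps) as Heps. pose proof (Rabs_pos R0) as HR0.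
  set (d := Rmin rho (Rmin (eps / (M + 1)) (rho / (Rabs R0 + 1)))).
  assert (Hd1 : d <= rho) by apply Rmin_l.
  assert (Hd2 : d <= eps / (M + 1)) by (eapply Rle_trans; [apply Rmin_r|apply Rmin_l]).
  assert (Hd3 : d <= rho / (Rabs R0 + 1)) by (eapply Rle_trans; [apply Rmin_r|apply Rmin_r]).
  assert (Hdp : 0 < d) by (repeat apply Rmin_pos; apply Rdiv_lt_0_compat; lra).
  exists (mkposreal _ Hdp). intros [q t] [Hbq Hbt].
  change (Rabs (kernel l q t - kernel l p 0) < eps). rewrite (kernel_le0 l p 0), Rminus_0_r by lra.
  change (Rabs (t - 0) < d) in Hbt. rewrite Rminus_0_r in Hbt. apply Rabs_def2 in Hbt.
  destruct (Rlt_dec 0 t) as [Ht|Ht]; [|rewrite kernel_le0, Rabs_R0 by lra; auto].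
  assert (Hq : rho <= normpt q) by (pose proof (normpt_ball_lower p q d Hbq); unfold rho in *; simpl in *; lra).
  assert (Hq0 : q <> pt0) by (intros E; rewrite E, normpt_pt0 in Hq; lra).
  assert (HR : R0 <= normpt q / t).
  { apply Rle_trans with (Rabs R0 + 1); [pose proof (Rle_abs R0); lra|].
    apply Rmult_le_reg_r with t; auto. unfold Rdiv. rewrite Rmult_assoc, Rinv_l, Rmult_1_r by lra.
    assert (t * (Rabs R0 + 1) < rho); [|nra].
    apply Rmult_lt_reg_r with (/ (Rabs R0 + 1)); [apply Rinv_0_lt_compat; lra|].
    rewrite Rmult_assoc, Rinv_r, Rmult_1_r by lra. simpl in Hbt. unfold Rdiv in Hd3. lra. }
  eapply Rle_lt_trans; [apply (kernel_bound _ C R0 HB l q t eq_refl Hq0 Ht HR)|].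
  apply Rle_lt_trans with (M * t).
  - unfold M, Rdiv. rewrite (Rmult_comm (Rabs C) t), (Rmult_comm (Rabs C * _) t), Rmult_assoc.
    apply Rmult_le_compat_l; [lra|]. apply Rmult_le_compat_l; [apply Rabs_pos|].
    apply Rinv_le_contravar; [apply pow_lt; lra|]. apply pow_incr; lra.
  - apply Rle_lt_trans with (M * (eps / (M + 1))); [apply Rmult_le_compat_l; simpl in Hbt; lra|].
    replace (M * (eps / (M + 1))) with (eps * (M / (M + 1))) by (field; lra).
    assert (M / (M + 1) < 1) by (apply Rmult_lt_reg_r with (M + 1); [lra|];
      unfold Rdiv; rewrite Rmult_assoc, Rinv_l by lra; lra).
    nra.
Qed.

Lemma kernel_continuous l p t0 : p <> pt0 -> 0 <= t0 ->
  continuous (fun z : pt * R => kernel l (fst z) (snd z)) (p, t0).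
Proof.
  intros Hp [Ht0|<-]; [apply kernel_continuous_pos | apply kernel_continuous_0]; auto.
Qed.

Lemma continuous_kernel_t l q t : q <> pt0 -> 0 <= t -> continuous (kernel l q) t.
Proof.
  intros Hq Ht.
  apply (continuous_comp_2 (fun _ : R => q) (fun t : R => t) (fun a b => kernel l a b) t).
  - apply continuous_const.
  - apply continuous_id.
  - apply kernel_continuous; auto.
Qed.

Lemma ex_RInt_kernel l q : q <> pt0 -> ex_RInt (kernel l q) 0 1.
Proof.
  intros Hq. apply (ex_RInt_continuous (V := R_CompleteNormedModule)). intros z Hz.
  apply continuous_kernel_t; auto. rewrite Rmin_left in Hz by lra. lra.
Qed.

Lemma kernel_is_derive l p i s t : (i < 4)%nat -> shift p i s <> pt0 ->
  is_derive (fun u => kernel l (shift p i u) t) s (kernel (i :: l) (shift p i s) t).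
Proof.
  intros Hi Hn. unfold kernel. destruct (Rlt_dec 0 t) as [Ht|Ht]; [|apply (is_derive_const 0)].
  set (p' := dilate (/ t) p).
  apply (is_derive_ext (fun u => / t ^ S (length l) * Dl l f (shift p' i (/ t * u)))).
  { intros u. unfold p'. rewrite dilate_shift. reflexivity. }
  assert (Hn' : shift p' i (/ t * s) <> pt0)
    by (unfold p'; rewrite <- dilate_shift; apply dilate_inv_nonzero; auto).
  assert (Hlin : is_derive (fun u : R => / t * u) s (/ t)) by (auto_derive; auto; ring).
  pose proof (is_derive_comp (fun v => Dl l f (shift p' i v)) (fun u => / t * u) s _ (/ t)
    (is_derive_Dl_shift f l p' i (/ t * s) Hs Hi Hn') Hlin) as H.
  apply (is_derive_scal _ _ (/ t ^ S (length l))) in H.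
  replace (/ t ^ S (length (i :: l)) * Dl (i :: l) f (dilate (/ t) (shift p i s)))
    with (/ t ^ S (length l) * scal (/ t) (Dl (i :: l) f (shift p' i (/ t * s)))); [exact H|].
  unfold p'. rewrite <- dilate_shift. change (scal (/ t) ?x) with (/ t * x).
  simpl length. change (t ^ S (S (length l))) with (t * t ^ S (length l)).
  assert (0 < t ^ S (length l)) by (apply pow_lt; auto). field. split; lra.
Qed.

Lemma is_derive_RInt_kernel l p i : p <> pt0 -> (i < 4)%nat ->
  is_derive (fun s => RInt (kernel l (shift p i s)) 0 1) 0 (RInt (kernel (i :: l) p) 0 1).
Proof.
  intros Hp Hi. pose proof (locally_shift_nonzero p i Hp Hi) as HL.
  assert (HD := is_derive_RInt_param (fun s t => kernel l (shift p i s) t) 0 1 0).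
  rewrite Rmin_left, Rmax_right in HD by lra.
  replace (RInt (kernel (i :: l) p) 0 1)
    with (RInt (fun t => Derive (fun u => kernel l (shift p i u) t) 0) 0 1).
  - apply HD.
    + eapply filter_imp; [|exact HL]. intros x Hx t _. eexists. apply kernel_is_derive; auto.
    + intros t Ht. destruct HL as [dl Hdl].
      apply continuity_2d_pt_ext_loc with (f := fun u v => kernel (i :: l) (shift p i u) v).
      * exists dl. intros u v Hu _. symmetry. apply is_derive_unique, kernel_is_derive; auto.
      * apply continuity_2d_pt_filterlim.
        apply (continuous_comp_2 (fun z : R * R => shift p i (fst z)) (fun z : R * R => snd z)
                 (fun a b => kernel (i :: l) a b) (0, t)).
        -- apply continuous_shift_fst; auto.
        -- apply continuous_snd.
        -- simpl. rewrite shift_0. apply kernel_continuous; auto; lra.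
    + eapply filter_imp; [|exact HL]. intros x Hx. apply ex_RInt_kernel; auto.
  - apply RInt_ext. intros x _. apply is_derive_unique.
    pose proof (kernel_is_derive l p i 0 x Hi ltac:(rewrite shift_0; auto)) as H.
    rewrite shift_0 in H. exact H.
Qed.

Lemma kernel_uniformly_near l p (eps : posreal) : p <> pt0 ->
  locally p (fun q => forall s, 0 <= s <= 1 -> Rabs (kernel l q s - kernel l p s) <= eps).
Proof.
  intros Hp. assert (He2 : 0 < eps / 2) by (pose proof (cond_pos eps); lra).
  destruct (choice (fun t (d : posreal) => 0 <= t <= 1 -> forall q s, ball p d q ->
     Rabs (s - t) < d -> Rabs (kernel l q s - kernel l p t) < eps / 2)) as [delta Hdelta].
  { intros t. destruct (classic (0 <= t <= 1)) as [Ht|Ht].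
    - destruct (proj1 (filterlim_locally _ _) (kernel_continuous l p t Hp (proj1 Ht))
        (mkposreal _ He2)) as [d Hd'].
      exists d. intros _ q s Hq Hst. apply (Hd' (q, s)). split; auto.
    - exists (mkposreal 1 Rlt_0_1). intros H; contradiction. }
  destruct (compactness_value_1d 0 1 delta) as [d Hcd].
  eapply filter_imp; [|apply (locally_ball p d)]. intros q Hbq s Hs'.
  apply Rnot_lt_le. intros Hn. apply (Hcd s Hs'). intros [t [Ht [Hst Hdt]]].
  assert (Hbq' : ball p (delta t) q) by (eapply ball_le; [exact Hdt|exact Hbq]).
  pose proof (Hdelta t Ht q s Hbq' Hst) as A1.
  pose proof (Hdelta t Ht p s (ball_center p _) Hst) as A2.
  pose proof (Rabs_triang (kernel l q s - kernel l p t) (- (kernel l p s - kernel l p t))) as T.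
  replace (kernel l q s - kernel l p t + - (kernel l p s - kernel l p t))
    with (kernel l q s - kernel l p s) in T by ring.
  rewrite Rabs_Ropp in T. lra.
Qed.

Lemma continuous_RInt_kernel l p : p <> pt0 -> continuous (fun q => RInt (kernel l q) 0 1) p.
Proof.
  intros Hp. apply filterlim_locally. intros eps.
  assert (He2 : 0 < eps / 2) by (pose proof (cond_pos eps); lra).
  generalize (filter_and _ _ (locally_nonzero p Hp) (kernel_uniformly_near l p (mkposreal _ He2) Hp)).
  apply filter_imp. intros q [Hq Hu].
  change (Rabs (RInt (kernel l q) 0 1 - RInt (kernel l p) 0 1) < eps).
  rewrite <- (RInt_minus (V := R_CompleteNormedModule)) by (apply ex_RInt_kernel; auto).
  eapply Rle_lt_trans.
  - apply (abs_RInt_le_const _ 0 1 (eps / 2)); [lra| |exact Hu].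
    apply (ex_RInt_minus (V := R_NormedModule)); apply ex_RInt_kernel; auto.
  - pose proof (cond_pos eps). lra.
Qed.
End Kernel.

(** * i ddbar of the radial potential *)

Lemma i_ddbar_hess (g : pt -> R) p u v :
  (forall i j, (i < 4)%nat -> (j < 4)%nat -> Dl (i :: j :: nil) g p = Dl (j :: i :: nil) g p) ->
  i_ddbar g p u v = RtoC (iddbar_hess (fun i j => Dl (i :: j :: nil) g p) u v).
Proof.
  intros SY.
  assert (S01 := SY 1%nat 0%nat ltac:(lia) ltac:(lia)). assert (S02 := SY 2%nat 0%nat ltac:(lia) ltac:(lia)).
  assert (S03 := SY 3%nat 0%nat ltac:(lia) ltac:(lia)). assert (S12 := SY 2%nat 1%nat ltac:(lia) ltac:(lia)).
  assert (S13 := SY 3%nat 1%nat ltac:(lia) ltac:(lia)). assert (S23 := SY 3%nat 2%nat ltac:(lia) ltac:(lia)).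
  unfold i_ddbar, iddbar_hess, wedge, sum2C, d_z_zb, dzdzb, zc, sum4, Jsgn, Jidx.
  simpl Nat.mul. simpl Nat.add. rewrite S01, S02, S03, S12, S13, S23.
  destruct u as [[u0 u1] [u2 u3]], v as [[v0 v1] [v2 v3]].
  unfold RtoC, Cmult, Cplus, Cminus, Copp, Cconj, Ci. simpl. f_equal; field.
Qed.

Lemma iddbar_hess_ext H H' u v : (forall i j, H i j = H' i j) -> iddbar_hess H u v = iddbar_hess H' u v.
Proof. intros E. unfold iddbar_hess, sum4. rewrite !E. reflexivity. Qed.

Lemma iddbar_hess_scal c H u v : iddbar_hess (fun i j => c * H i j) u v = c * iddbar_hess H u v.
Proof. unfold iddbar_hess, sum4. ring. Qed.

Lemma ex_RInt_sum4 (h : nat -> R -> R) a b : (forall i, (i < 4)%nat -> ex_RInt (h i) a b) ->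
  ex_RInt (fun x => sum4 (fun i => h i x)) a b.
Proof.
  intros H. unfold sum4.
  apply (ex_RInt_plus (V := R_NormedModule) (fun x => h 0%nat x + h 1%nat x + h 2%nat x) (h 3%nat)); [|apply H; lia].
  apply (ex_RInt_plus (V := R_NormedModule) (fun x => h 0%nat x + h 1%nat x) (h 2%nat)); [|apply H; lia].
  apply (ex_RInt_plus (V := R_NormedModule) (h 0%nat) (h 1%nat)); apply H; lia.
Qed.

Lemma RInt_sum4 (h : nat -> R -> R) a b : (forall i, (i < 4)%nat -> ex_RInt (h i) a b) ->
  RInt (fun x => sum4 (fun i => h i x)) a b = sum4 (fun i => RInt (h i) a b).
Proof.
  intros H. unfold sum4.
  assert (E01 : ex_RInt (fun x => h 0%nat x + h 1%nat x) a b)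
    by (apply (ex_RInt_plus (V := R_NormedModule) (h 0%nat) (h 1%nat)); apply H; lia).
  assert (E012 : ex_RInt (fun x => h 0%nat x + h 1%nat x + h 2%nat x) a b)
    by (apply (ex_RInt_plus (V := R_NormedModule) (fun x => h 0%nat x + h 1%nat x) (h 2%nat));
        [exact E01|apply H; lia]).
  rewrite (RInt_plus (V := R_CompleteNormedModule) (fun x => h 0%nat x + h 1%nat x + h 2%nat x) (h 3%nat));
    [|exact E012|apply H; lia].
  rewrite (RInt_plus (V := R_CompleteNormedModule) (fun x => h 0%nat x + h 1%nat x) (h 2%nat));
    [|exact E01|apply H; lia].
  rewrite (RInt_plus (V := R_CompleteNormedModule) (h 0%nat) (h 1%nat)); [|apply H; lia|apply H; lia].
  reflexivity.
Qed.

Lemma RInt_iddbar_hess (g : nat -> nat -> R -> R) u v :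
  (forall i j, (i < 4)%nat -> (j < 4)%nat -> ex_RInt (g i j) 0 1) ->
  iddbar_hess (fun i j => RInt (g i j) 0 1) u v = RInt (fun t => iddbar_hess (fun i j => g i j t) u v) 0 1.
Proof.
  intros Hg. set (c j k := Jsgn k * wedge u v j k).
  assert (E : forall j k, (j < 4)%nat -> (k < 4)%nat -> ex_RInt (fun t => c j k * g j (Jidx k) t) 0 1)
    by (intros j k Hj Hk; apply (ex_RInt_scal (V := R_NormedModule)), Hg; auto using Jidx_lt4).
  unfold iddbar_hess.
  rewrite (RInt_ext _ (fun t => / 2 * sum4 (fun j => sum4 (fun k => c j k * g j (Jidx k) t))))
    by (intros x _; unfold c, sum4; simpl; ring).
  rewrite (RInt_scal (V := R_CompleteNormedModule)).
  2:{ apply ex_RInt_sum4; intros j Hj; apply ex_RInt_sum4; intros k Hk; apply E; auto. }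
  change (scal (/ 2) ?x) with (/ 2 * x). f_equal.
  rewrite RInt_sum4 by (intros j Hj; apply ex_RInt_sum4; intros k Hk; apply E; auto).
  apply sum4_ext_lt4. intros j Hj.
  rewrite RInt_sum4 by (intros k Hk; apply E; auto).
  apply sum4_ext_lt4. intros k Hk.
  rewrite (RInt_scal (V := R_CompleteNormedModule)) by (apply Hg; auto using Jidx_lt4).
  unfold c. change (scal ?a ?x) with (a * x). ring.
Qed.

Section RadialPotential.
Variable f : pt -> R.
Hypotheses (Hs : smooth_away f) (Hd : decays f 2).

Definition radial_potential (p : pt) : R := -2 * RInt (kernel f nil p) 0 1.

Lemma Dl_radial_potential l : forall p, p <> pt0 ->
  Dl l radial_potential p = -2 * RInt (kernel f l p) 0 1.
Proof.
  induction l as [|i l IH]; intros p Hp; [reflexivity|].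
  destruct (Nat.lt_ge_cases i 4) as [Hi|Hi].
  - apply (Dl_cons_of_is_derive (fun q => -2 * RInt (kernel f l q) 0 1)
      (fun q => -2 * RInt (kernel f (i :: l) q) 0 1)); auto.
    apply is_derive_scal. apply is_derive_RInt_kernel; auto.
  - rewrite Dl_ge4 by auto. rewrite (RInt_ext _ (fun _ => 0)).
    + rewrite RInt_const. change (scal (1 - 0) 0) with ((1 - 0) * 0). ring.
    + intros x _. unfold kernel. destruct (Rlt_dec 0 x); [|reflexivity].
      rewrite Dl_ge4 by auto. apply Rmult_0_r.
Qed.

Lemma smooth_radial_potential : smooth_away radial_potential.
Proof.
  intros l p Hp. split.
  - apply cont_at_iff. apply (continuous_ext_loc _ (fun q => -2 * RInt (kernel f l q) 0 1)).
    { eapply filter_imp; [|apply locally_nonzero; eauto]. intros q Hq.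
      symmetry. apply Dl_radial_potential; auto. }
    apply continuous_Rscal. apply continuous_RInt_kernel; auto.
  - intros i Hi. eexists. eapply is_derive_ext_loc.
    { eapply filter_imp; [|apply (locally_shift_nonzero p i Hp Hi)]. intros t Ht.
      symmetry. apply Dl_radial_potential; auto. }
    apply is_derive_scal. apply is_derive_RInt_kernel; auto.
Qed.

Lemma decays_radial_potential : decays radial_potential 2.
Proof.
  intros k. destruct (Hd k) as [C [R0 HB]].
  exists (2 * Rabs C), R0. intros l p Hl Hp HR.
  rewrite Dl_radial_potential by auto.
  assert (Hnp : 0 < normpt p) by (apply normpt_pos; auto).
  assert (Hpk : 0 < / normpt p ^ (2 + k)) by (apply Rinv_0_lt_compat, pow_lt; auto).
  rewrite Rabs_mult. replace (Rabs (-2)) with 2 by (rewrite Rabs_left by lra; ring).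
  unfold Rdiv. rewrite Rmult_assoc. apply Rmult_le_compat_l; [lra|].
  replace (Rabs C * / normpt p ^ (2 + k)) with ((1 - 0) * (Rabs C * / normpt p ^ (2 + k))) by ring.
  apply abs_RInt_le_const; [lra | apply ex_RInt_kernel; auto|].
  intros t Ht. destruct (Rlt_dec 0 t) as [Htp|Htn].
  - eapply Rle_trans; [apply (kernel_bound f k C R0 HB l p t Hl Hp Htp)|].
    + apply Rle_trans with (normpt p); auto.
      apply Rmult_le_reg_r with t; auto. unfold Rdiv. rewrite Rmult_assoc, Rinv_l by lra. nra.
    + unfold Rdiv. rewrite (Rmult_comm (Rabs C) t), Rmult_assoc.
      rewrite <- (Rmult_1_l (Rabs C * / normpt p ^ (2 + k))) at 2.
      apply Rmult_le_compat_r; [|lra]. apply Rmult_le_pos; [apply Rabs_pos|lra].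
  - rewrite kernel_le0, Rabs_R0 by lra. apply Rmult_le_pos; [apply Rabs_pos|lra].
Qed.
End RadialPotential.

Lemma radial_potential_invariant (f : pt -> R) (g : pt -> pt) :
  (forall s q, g (dilate s q) = dilate s (g q)) -> fun_inv g f -> fun_inv g (radial_potential f).
Proof.
  intros Hc Hf p Hp. unfold radial_potential. f_equal. apply RInt_ext. intros x Hx.
  rewrite Rmin_left, Rmax_right in Hx by lra.
  unfold kernel. destruct (Rlt_dec 0 x) as [_|]; [|lra]. simpl.
  rewrite <- Hc, Hf; auto. apply dilate_inv_nonzero; auto; lra.
Qed.

Lemma is_derive_0_of_quadratic_bound (F : R -> R) K (d : posreal) : F 0 = 0 ->
  (forall t, Rabs t < d -> Rabs (F t) <= K * t ^ 2) -> is_derive F 0 0.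
Proof.
  intros H0 HB. apply is_derive_Reals. intros eps Heps.
  set (K1 := Rabs K + 1). assert (HK1 : 0 < K1) by (unfold K1; pose proof (Rabs_pos K); lra).
  assert (Hd' : 0 < Rmin d (eps / K1)) by (apply Rmin_pos; [apply cond_pos|apply Rdiv_lt_0_compat; lra]).
  exists (mkposreal _ Hd'). intros h Hh Hhd. simpl in Hhd.
  pose proof (Rmin_l d (eps / K1)). pose proof (Rmin_r d (eps / K1)).
  rewrite Rplus_0_l, H0, !Rminus_0_r. unfold Rdiv. rewrite Rabs_mult, Rabs_inv.
  assert (Hah : 0 < Rabs h) by (apply Rabs_pos_lt; auto).
  apply Rmult_lt_reg_r with (Rabs h); auto. rewrite Rmult_assoc, Rinv_l, Rmult_1_r by lra.
  eapply Rle_lt_trans; [apply HB; lra|].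
  assert (Hh1 : Rabs h * K1 < eps).
  { apply Rmult_lt_reg_r with (/ K1); [apply Rinv_0_lt_compat; lra|].
    rewrite Rmult_assoc, Rinv_r, Rmult_1_r by lra. unfold Rdiv in *. lra. }
  rewrite <- (pow2_abs h). pose proof (Rle_abs K). unfold K1 in Hh1. simpl. nra.
Qed.

Lemma decays_uniform4 (g : nat -> pt -> R) m k : (forall j, (j < 4)%nat -> decays (g j) m) ->
  exists C R0, forall j l p, (j < 4)%nat -> length l = k -> p <> pt0 -> R0 <= normpt p ->
    Rabs (Dl l (g j) p) <= C / normpt p ^ (m + k).
Proof.
  intros Hd.
  destruct (Hd 0%nat ltac:(lia) k) as [C0 [R0 H0]], (Hd 1%nat ltac:(lia) k) as [C1 [R1 H1]],
    (Hd 2%nat ltac:(lia) k) as [C2 [R2 H2]], (Hd 3%nat ltac:(lia) k) as [C3 [R3 H3]].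
  set (C := Rabs C0 + Rabs C1 + Rabs C2 + Rabs C3).
  exists C, (Rmax (Rmax R0 R1) (Rmax R2 R3)). intros j l p Hj Hl Hp HR.
  assert (Hn : 0 < / normpt p ^ (m + k)) by (apply Rinv_0_lt_compat, pow_lt, normpt_pos; auto).
  assert (weaken_bound : forall Cj Rj, Rj <= normpt p -> Rabs Cj <= C ->
    (Rj <= normpt p -> Rabs (Dl l (g j) p) <= Cj / normpt p ^ (m + k)) ->
    Rabs (Dl l (g j) p) <= C / normpt p ^ (m + k)).
  { intros Cj Rj HRj HCj HB. eapply Rle_trans; [apply HB; auto|].
    unfold Rdiv. apply Rmult_le_compat_r; [lra|]. pose proof (Rle_abs Cj). lra. }
  pose proof (Rabs_pos C0); pose proof (Rabs_pos C1); pose proof (Rabs_pos C2); pose proof (Rabs_pos C3).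
  pose proof (Rmax_l (Rmax R0 R1) (Rmax R2 R3)); pose proof (Rmax_r (Rmax R0 R1) (Rmax R2 R3)).
  pose proof (Rmax_l R0 R1); pose proof (Rmax_r R0 R1); pose proof (Rmax_l R2 R3); pose proof (Rmax_r R2 R3).
  unfold C in *. case4 j.
  - apply (weaken_bound C0 R0); [lra|lra|auto].
  - apply (weaken_bound C1 R1); [lra|lra|auto].
  - apply (weaken_bound C2 R2); [lra|lra|auto].
  - apply (weaken_bound C3 R3); [lra|lra|auto].
Qed.

Lemma dform1_bound gamma u v : (forall j, (j < 4)%nat -> decays (gamma j) 3) ->
  exists C R0, forall q, q <> pt0 -> R0 <= normpt q -> Rabs (dform1 gamma q u v) <= C / normpt q ^ 4.
Proof.
  intros Hdec. destruct (decays_uniform4 gamma 3 1 Hdec) as [C [R0 HB]].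
  exists (C * sum4 (fun i => sum4 (fun j => Rabs (wedge u v i j)))), R0. intros q Hq HR.
  unfold dform1. eapply Rle_trans; [apply Rabs_sum4|].
  apply Rle_trans with (sum4 (fun i => sum4 (fun j => C / normpt q ^ 4 * Rabs (wedge u v i j)))).
  - apply sum4_le. intros i Hi. eapply Rle_trans; [apply Rabs_sum4|]. apply sum4_le. intros j Hj.
    rewrite Rabs_mult. apply Rmult_le_compat_r; [apply Rabs_pos|]. apply (HB j (i :: nil)); auto.
  - right. unfold sum4, Rdiv. ring.
Qed.

Section Potential.
Variable gamma : oneform.
Hypothesis Hsm : forall j, (j < 4)%nat -> smooth_away (gamma j).
Hypothesis HS1 : forall l : C, Cmod l = 1 -> form1_inv (s1act l) gamma.
Hypothesis H11 : type11 (dform1 gamma).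
Hypothesis Hdec : forall j, (j < 4)%nat -> decays (gamma j) 3.

Let f := iota_xi gamma.
Let Hf : smooth_away f := smooth_iota_xi gamma Hsm.
Let Hfd : decays f 2 := decays_iota_xi gamma Hsm Hdec.

Lemma iddbar_kernel p u v t : p <> pt0 -> 0 < t ->
  iddbar_hess (fun i j => kernel f (i :: j :: nil) p t) u v =
  / t ^ 3 * (dform1 gamma (dilate (/ t) p) u v + / 2 *
    sum4 (fun i => coord (dilate (/ t) p) i * dform1_partial gamma i (dilate (/ t) p) u v)).
Proof.
  intros Hp Ht. unfold kernel. destruct (Rlt_dec 0 t) as [_|]; [|lra]. simpl length.
  rewrite (iddbar_hess_scal (/ t ^ 3) (fun i j => Dl (i :: j :: nil) f (dilate (/ t) p))).
  f_equal. apply iddbar_iota_xi; auto. apply dilate_inv_nonzero; auto.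
Qed.

Definition scaled_dform1 (p u v : pt) (t : R) : R :=
  if Rlt_dec 0 t then / t ^ 2 * dform1 gamma (dilate (/ t) p) u v else 0.

Lemma is_derive_scaled_dform1_0 p u v : p <> pt0 -> is_derive (scaled_dform1 p u v) 0 0.
Proof.
  intros Hp. destruct (dform1_bound gamma u v Hdec) as [C [R0 HB]].
  assert (Hnp : 0 < normpt p) by (apply normpt_pos; auto).
  assert (Hn4 : 0 < normpt p ^ 4) by (apply pow_lt; auto).
  pose proof (Rabs_pos R0) as HR0.
  assert (Hd : 0 < normpt p / (Rabs R0 + 1)) by (apply Rdiv_lt_0_compat; lra).
  apply (is_derive_0_of_quadratic_bound _ (Rabs C / normpt p ^ 4) (mkposreal _ Hd)).
  { unfold scaled_dform1. destruct (Rlt_dec 0 0); [lra|reflexivity]. }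
  intros t Ht. simpl in Ht. unfold scaled_dform1. destruct (Rlt_dec 0 t) as [Htp|Htn].
  2:{ rewrite Rabs_R0. apply Rmult_le_pos; [|apply pow2_ge_0].
      apply Rmult_le_pos; [apply Rabs_pos|left; apply Rinv_0_lt_compat; lra]. }
  rewrite Rabs_pos_eq in Ht by lra.
  assert (HR : R0 <= normpt (dilate (/ t) p)).
  { rewrite normpt_dilate_inv by auto. apply Rle_trans with (Rabs R0 + 1); [pose proof (Rle_abs R0); lra|].
    apply Rmult_le_reg_r with t; auto. unfold Rdiv. rewrite Rmult_assoc, Rinv_l, Rmult_1_r by lra.
    apply Rmult_lt_compat_r with (r := Rabs R0 + 1) in Ht; [|lra].
    unfold Rdiv in Ht. rewrite Rmult_assoc, Rinv_l, Rmult_1_r in Ht by lra. lra. }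
  pose proof (HB _ (dilate_inv_nonzero t p Htp Hp) HR) as Bd.
  rewrite normpt_dilate_inv in Bd by auto.
  replace (C / (normpt p / t) ^ 4) with (t ^ 2 * (C / normpt p ^ 4 * t ^ 2)) in Bd by (field; lra).
  rewrite Rabs_mult, Rabs_pos_eq by (left; apply Rinv_0_lt_compat, pow_lt; auto).
  apply Rmult_le_reg_l with (t ^ 2); [apply pow_lt; auto|].
  rewrite <- Rmult_assoc, Rinv_r, Rmult_1_l by (apply pow_nonzero; lra).
  eapply Rle_trans; [exact Bd|]. apply Rmult_le_compat_l; [apply pow2_ge_0|].
  apply Rmult_le_compat_r; [apply pow2_ge_0|]. unfold Rdiv.
  apply Rmult_le_compat_r; [left; apply Rinv_0_lt_compat; auto|apply Rle_abs].
Qed.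

Lemma is_derive_scaled_dform1_pos p u v x : p <> pt0 -> 0 < x ->
  is_derive (scaled_dform1 p u v) x (-2 * iddbar_hess (fun i j => kernel f (i :: j :: nil) p x) u v).
Proof.
  intros Hp Hx. set (c := fun t => dilate (/ t) p).
  assert (Hdc : forall k, (k < 4)%nat -> is_derive (fun t => coord (c t) k) x (- coord p k / x ^ 2)).
  { intros k Hk. apply (is_derive_ext (fun t => / t * coord p k)).
    { intros t. unfold c. rewrite coord_dilate. reflexivity. }
    auto_derive; [lra|field; lra]. }
  assert (HD : is_derive (fun t => dform1 gamma (c t) u v) x
    (sum4 (fun i => sum4 (fun j => wedge u v i j *
       sum4 (fun k => (- coord p k / x ^ 2) * partial k (partial i (gamma j)) (c x)))))).
  { unfold dform1. apply is_derive_sum4. intros i Hi. apply is_derive_sum4. intros j Hj.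
    apply (is_derive_ext (fun t => wedge u v i j * partial i (gamma j) (c t))).
    { intros t. apply Rmult_comm. }
    apply is_derive_scal. apply (chain_rule (partial i (gamma j)) c x); auto.
    - exact (smooth_Dl (gamma j) (i :: nil) (Hsm j Hj)).
    - apply dilate_inv_nonzero; auto. }
  assert (Hinv : is_derive (fun t => / t ^ 2) x (-2 / x ^ 3)) by (auto_derive; [nra|field; lra]).
  apply (is_derive_ext_loc (fun t => / t ^ 2 * dform1 gamma (c t) u v)).
  { assert (Hx2 : 0 < x / 2) by lra. exists (mkposreal _ Hx2). intros t Ht.
    change (Rabs (t - x) < x / 2) in Ht. apply Rabs_def2 in Ht. unfold scaled_dform1.
    destruct (Rlt_dec 0 t); [reflexivity|lra]. }
  pose proof (is_derive_mult _ _ x _ _ Hinv HD Rmult_comm) as HM.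
  rewrite iddbar_kernel by auto. unfold c in HM |- *.
  replace (-2 * _) with (plus (mult (-2 / x ^ 3) (dform1 gamma (dilate (/ x) p) u v))
    (mult (/ x ^ 2) (sum4 (fun i => sum4 (fun j => wedge u v i j * sum4 (fun k =>
      (- coord p k / x ^ 2) * partial k (partial i (gamma j)) (dilate (/ x) p))))))); [exact HM|].
  change (plus (mult ?a ?b) (mult ?c ?d)) with (a * b + c * d).
  unfold dform1_partial, sum4. rewrite !coord_dilate. simpl Dl.
  (* The equation generated by [replace] lives in Coquelicot's copy of [R]; [field] needs [R]. *)
  match goal with |- ?a = ?b => change (@eq R a b) end. field. lra.
Qed.

Lemma RInt_iddbar_kernel p u v : p <> pt0 ->
  RInt (fun t => -2 * iddbar_hess (fun i j => kernel f (i :: j :: nil) p t) u v) 0 1 =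
  dform1 gamma p u v.
Proof.
  intros Hp.
  assert (HI : is_RInt (fun t => -2 * iddbar_hess (fun i j => kernel f (i :: j :: nil) p t) u v) 0 1
    (minus (scaled_dform1 p u v 1) (scaled_dform1 p u v 0))).
  { apply (is_RInt_derive (V := R_CompleteNormedModule)).
    - intros x Hx. rewrite Rmin_left, Rmax_right in Hx by lra.
      destruct (Req_dec x 0) as [->|Hx0]; [|apply is_derive_scaled_dform1_pos; auto; lra].
      replace (-2 * _) with 0; [apply is_derive_scaled_dform1_0; auto|].
      rewrite (iddbar_hess_ext _ (fun _ _ => 0)) by (intros; apply kernel_le0; lra).
      unfold iddbar_hess, sum4. ring.
    - intros x Hx. rewrite Rmin_left, Rmax_right in Hx by lra.
      apply continuous_Rscal. unfold iddbar_hess. apply continuous_Rscal.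
      apply continuous_sum4. intros j Hj. apply continuous_sum4. intros k Hk.
      apply (continuous_ext (fun t => (Jsgn k * wedge u v j k) * kernel f (j :: Jidx k :: nil) p t));
        [intros t; simpl; ring|].
      apply continuous_Rscal, continuous_kernel_t; auto; lra. }
  rewrite (is_RInt_unique _ _ _ _ HI). unfold scaled_dform1.
  destruct (Rlt_dec 0 1) as [_|]; [|lra]. destruct (Rlt_dec 0 0) as [|_]; [lra|].
  rewrite Rinv_1, dilate_1, pow1, Rinv_1, Rmult_1_l.
  change (minus ?a ?b) with (a - b). rewrite Rminus_0_r. reflexivity.
Qed.

Lemma iddbar_radial_potential p u v : p <> pt0 ->
  iddbar_hess (fun i j => Dl (i :: j :: nil) (radial_potential f) p) u v = dform1 gamma p u v.
Proof.
  intros Hp. rewrite <- RInt_iddbar_kernel by auto.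
  rewrite (iddbar_hess_ext _ (fun i j => RInt (fun t => -2 * kernel f (i :: j :: nil) p t) 0 1)).
  2:{ intros i j. rewrite Dl_radial_potential, (RInt_scal (V := R_CompleteNormedModule)) by
        (auto; apply ex_RInt_kernel; auto). reflexivity. }
  rewrite RInt_iddbar_hess.
  - apply RInt_ext. intros x _. apply iddbar_hess_scal.
  - intros i j _ _. apply (ex_RInt_scal (V := R_NormedModule)), ex_RInt_kernel; auto.
Qed.
End Potential.

Lemma mat_act_s1act_Ci M q : mat_act M (s1act Ci q) = s1act Ci (mat_act M q).
Proof.
  destruct M as [[[a1 a2] [b1 b2]] [[c1 c2] [d1 d2]]], q as [[x1 y1] [x2 y2]].
  unfold mat_act, s1act, Ci, Cmult, Cplus; simpl. f_equal; f_equal; ring.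
Qed.

Lemma mat_act_dilate M s q : mat_act M (dilate s q) = dilate s (mat_act M q).
Proof.
  destruct M as [[[a1 a2] [b1 b2]] [[c1 c2] [d1 d2]]], q as [[x1 y1] [x2 y2]].
  unfold mat_act, dilate, Cmult, Cplus; simpl. f_equal; f_equal; ring.
Qed.

Lemma s1act_s1act_Ci l q : s1act l (s1act Ci q) = s1act Ci (s1act l q).
Proof.
  destruct l as [a b], q as [[x1 y1] [x2 y2]].
  unfold s1act, Ci, Cmult; simpl. f_equal; f_equal; ring.
Qed.

Lemma s1act_dilate l s q : s1act l (dilate s q) = dilate s (s1act l q).
Proof.
  destruct l as [a b], q as [[x1 y1] [x2 y2]].
  unfold s1act, dilate, Cmult; simpl. f_equal; f_equal; ring.
Qed.

Lemma iota_xi_invariant (g : pt -> pt) gamma :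
  (forall q, g (s1act Ci q) = s1act Ci (g q)) -> form1_inv g gamma -> fun_inv g (iota_xi gamma).
Proof. intros Hc Hg q Hq. unfold iota_xi. rewrite <- Hc. apply Hg; auto. Qed.

Theorem proposition4p3 (G : list mat2) (gamma : oneform) :
  finite_subgroup_SU2 G ->
  (forall j, (j < 4)%nat -> smooth_away (gamma j)) ->
  (forall M, In M G -> form1_inv (mat_act M) gamma) ->
  (forall l : C, Cmod l = 1 -> form1_inv (s1act l) gamma) ->
  type11 (dform1 gamma) ->
  (forall j, (j < 4)%nat -> decays (gamma j) 3) ->
  exists psi : pt -> R,
    smooth_away psi /\
    (forall M, In M G -> fun_inv (mat_act M) psi) /\
    (forall l : C, Cmod l = 1 -> fun_inv (s1act l) psi) /\
    (forall p u v, p <> pt0 -> RtoC (dform1 gamma p u v) = i_ddbar psi p u v) /\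
    decays psi 2.
Proof.
  intros _ Hsm HG HS1 H11 Hdec.
  pose proof (smooth_iota_xi gamma Hsm) as Hf. pose proof (decays_iota_xi gamma Hsm Hdec) as Hfd.
  exists (radial_potential (iota_xi gamma)). split; [|split; [|split; [|split]]].
  - apply smooth_radial_potential; auto.
  - intros M HM. apply radial_potential_invariant; [apply mat_act_dilate|].
    apply iota_xi_invariant; [apply mat_act_s1act_Ci | apply HG; auto].
  - intros l Hl. apply radial_potential_invariant; [apply s1act_dilate|].
    apply iota_xi_invariant; [apply s1act_s1act_Ci | apply HS1; auto].
  - intros p u v Hp. rewrite i_ddbar_hess.
    + f_equal. symmetry. apply iddbar_radial_potential; auto.
    + intros i j Hi Hj. apply schwarz; auto. apply smooth_radial_potential; auto.
  - apply decays_radial_potential; auto.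
Qed.
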